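(* Let $\pi:E\to B$ be a function of sets. The inclusion $\mathbf{Set}^{\downarrow}_{/_{\ulcorner}\pi}\hookrightarrow\mathbf{Set}^{\downarrow}_{/\pi}$ is a subtopos inclusion: it has a left exact left adjoint, given by the vertical/cartesian factorization, which sends an object $(\pi':E'\to B',\ (u:E'\to E,\ f:B'\to B))$ of $\mathbf{Set}^{\downarrow}_{/\pi}$ to the pullback $f^*\pi : B'\times_B E\to B'$ with its cartesian map to $\pi$ (the unit being the induced map $E'\to B'\times_B E$ over $B'$). As a corollary, for any Dirichlet functor $D$, the inclusion $\mathbf{Dir}_{\ulcorner/D}\hookrightarrow\mathbf{Dir}_{/D}$ is a subtopos inclusion.
   Context: $\mathbf{Set}^{\downarrow}$ is the category of functions $E\to B$ (''bundles'') and commuting squares; $\mathbf{Set}^{\downarrow}_{/\pi}$ is its slice over $\pi$, and $\mathbf{Set}^{\downarrow}_{/_{\ulcorner}\pi}$ is the full subcategory of those objects whose structure map to $\pi$ is a pullback square. A Dirichlet functor is a functor $D:\mathbf{Set}^{op}\to\mathbf{Set}$ preserving connected limits; $\mathbf{Dir}$ is the category of Dirichlet functors and natural transformations, $\mathbf{Dir}_{/D}$ its slice over $D$, and $\mathbf{Dir}_{\ulcorner/D}$ the full subcategory of $\mathbf{Dir}_{/D}$ on those objects whose map to $D$ is a cartesian natural transformation (all naturality squares pullbacks). A subtopos inclusion is a fully faithful functor between toposes with a left exact left adjoint. *)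

From Stdlib Require Import List Relations FunctionalExtensionality ProofIrrelevance.

Set Universe Polymorphism.

Polymorphic Cumulative Record Category@{o h} := {
  Obj : Type@{o};
  Hom : Obj -> Obj -> Type@{h};
  idm : forall x, Hom x x;
  cmp : forall x y z, Hom y z -> Hom x y -> Hom x z;
  cmp_idl : forall x y (f : Hom x y), cmp x y y (idm y) f = f;
  cmp_idr : forall x y (f : Hom x y), cmp x x y f (idm x) = f;
  cmp_assoc : forall w x y z (h : Hom y z) (g : Hom x y) (f : Hom w x),
      cmp w x z (cmp x y z h g) f = cmp w y z h (cmp w x y g f) }.

Arguments Obj : clear implicits.
Arguments Hom {C} x y : rename.
Arguments idm {C} x : rename.
Arguments cmp {C x y z} g f : rename.
Coercion Obj : Category >-> Sortclass.

Notation "g ∘ f" := (cmp g f) (at level 40, left associativity).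

Definition op@{o h} (C : Category@{o h}) : Category@{o h}.
Proof.
  refine {| Obj := Obj C;
            Hom := fun x y => @Hom C y x;
            idm := fun x => @idm C x;
            cmp := fun x y z g f => @cmp C z y x f g |}.
  - intros; apply cmp_idr.
  - intros; apply cmp_idl.
  - intros; symmetry; apply cmp_assoc.
Defined.

Definition TypeCat@{i j + | i < j +} : Category@{j i}.
Proof.
  exact (Build_Category@{j i} Type@{i} (fun A B => A -> B) (fun A a => a)
    (fun A B C g f a => g (f a)) (fun _ _ _ => eq_refl) (fun _ _ _ => eq_refl)
    (fun _ _ _ _ _ _ _ => eq_refl)).
Defined.


Polymorphic Cumulative Record Functor (C D : Category) := {
  fobj : C -> D;
  fmap : forall x y, Hom x y -> Hom (fobj x) (fobj y);
  fmap_id : forall x, fmap x x (idm x) = idm (fobj x);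
  fmap_cmp : forall x y z (g : Hom y z) (f : Hom x y),
      fmap x z (g ∘ f) = fmap y z g ∘ fmap x y f }.

Arguments fobj {C D} F x : rename.
Arguments fmap {C D} F {x y} f : rename.

Definition FComp {C D E : Category} (G : Functor C D) (L : Functor D E) : Functor C E.
Proof.
  refine {| fobj := fun x => fobj L (fobj G x);
            fmap := fun x y f => fmap L (fmap G f) |}.
  - intros; rewrite fmap_id; apply fmap_id.
  - intros; rewrite fmap_cmp; apply fmap_cmp.
Defined.

Polymorphic Cumulative Record NatTrans {C D : Category} (F G : Functor C D) := {
  ncomp : forall x, Hom (fobj F x) (fobj G x);
  nnat : forall x y (f : Hom x y), fmap G f ∘ ncomp x = ncomp y ∘ fmap F f }.

Arguments ncomp {C D F G} a x : rename.

Definition IsCone {J C : Category} (G : Functor J C) (c : C)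
  (l : forall j, Hom c (fobj G j)) : Prop :=
  forall j j' (u : Hom j j'), fmap G u ∘ l j = l j'.

Definition IsLimit {J C : Category} (G : Functor J C) (c : C)
  (l : forall j, Hom c (fobj G j)) : Prop :=
  IsCone G c l /\
  forall (d : C) (m : forall j, Hom d (fobj G j)), IsCone G d m ->
    exists h : Hom d c, (forall j, l j ∘ h = m j) /\
      forall h' : Hom d c, (forall j, l j ∘ h' = m j) -> h' = h.

Definition FiniteCat (J : Category) : Prop :=
  (exists lo : list (Obj J), forall x, In x lo) /\
  (forall x y : J, exists lh : list (Hom x y), forall f, In f lh).

Definition ConnectedCat (J : Category) : Prop :=
  inhabited (Obj J) /\
  forall x y : J, clos_refl_sym_trans (Obj J) (fun a b => inhabited (Hom a b)) x y.

Definition HasFiniteLimits (C : Category) : Prop :=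
  forall J : Category, FiniteCat J ->
    forall G : Functor J C, exists (c : C) (l : forall j, Hom c (fobj G j)), IsLimit G c l.

Definition PreservesFiniteLimits {C D : Category} (L : Functor C D) : Prop :=
  forall J : Category, FiniteCat J ->
    forall (G : Functor J C) (c : C) (l : forall j, Hom c (fobj G j)),
      IsLimit G c l -> IsLimit (FComp G L) (fobj L c) (fun j => fmap L (l j)).

Definition IsTerminal {C : Category} (t : C) : Prop :=
  forall x : C, exists f : Hom x t, forall g : Hom x t, g = f.

Definition IsProduct {C : Category} {a b p : C} (pa : Hom p a) (pb : Hom p b) : Prop :=
  forall (x : C) (f : Hom x a) (g : Hom x b),
    exists h : Hom x p, (pa ∘ h = f /\ pb ∘ h = g) /\
      forall h' : Hom x p, pa ∘ h' = f /\ pb ∘ h' = g -> h' = h.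

Definition IsPullback {C : Category} {a b c : C} (f : Hom a c) (g : Hom b c)
  (p : C) (p1 : Hom p a) (p2 : Hom p b) : Prop :=
  f ∘ p1 = g ∘ p2 /\
  forall (x : C) (q1 : Hom x a) (q2 : Hom x b), f ∘ q1 = g ∘ q2 ->
    exists h : Hom x p, (p1 ∘ h = q1 /\ p2 ∘ h = q2) /\
      forall h' : Hom x p, p1 ∘ h' = q1 /\ p2 ∘ h' = q2 -> h' = h.

Definition CartesianClosed (C : Category) : Prop :=
  forall a b : C,
    exists (e p : C) (pa : Hom p a) (pe : Hom p e) (ev : Hom p b),
      IsProduct pa pe /\
      forall (x q : C) (qa : Hom q a) (qx : Hom q x), IsProduct qa qx ->
        forall f : Hom q b,
          let Curry (g : Hom x e) : Prop :=
            forall h : Hom q p, pa ∘ h = qa -> pe ∘ h = g ∘ qx -> ev ∘ h = f in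
          exists g : Hom x e, Curry g /\ forall g', Curry g' -> g' = g.

Definition Mono {C : Category} {s x : C} (m : Hom s x) : Prop :=
  forall (z : C) (u v : Hom z s), m ∘ u = m ∘ v -> u = v.

Definition HasSubobjectClassifier (C : Category) : Prop :=
  exists (t om : C) (tru : Hom t om), IsTerminal t /\
    forall (s x : C) (m : Hom s x), Mono m ->
      let Classifies (chi : Hom x om) : Prop :=
        forall bang : Hom s t, IsPullback chi tru s m bang in
      exists chi : Hom x om, Classifies chi /\ forall chi', Classifies chi' -> chi' = chi.

Definition Topos (C : Category) : Prop :=
  HasFiniteLimits C /\ CartesianClosed C /\ HasSubobjectClassifier C.

Definition FullyFaithful {C D : Category} (F : Functor C D) : Prop :=
  forall x y : C,
    (forall f g : Hom x y, fmap F f = fmap F g -> f = g) /\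
    (forall k : Hom (fobj F x) (fobj F y), exists f : Hom x y, fmap F f = k).

Definition LeftAdjointUnit {C D : Category} (L : Functor C D) (R : Functor D C)
  (eta : forall x : C, Hom x (fobj R (fobj L x))) : Prop :=
  (forall (x y : C) (f : Hom x y), fmap R (fmap L f) ∘ eta x = eta y ∘ f) /\
  (forall (x : C) (y : D) (g : Hom x (fobj R y)),
     exists h : Hom (fobj L x) y, fmap R h ∘ eta x = g /\
       forall h', fmap R h' ∘ eta x = g -> h' = h).

Definition SubtoposInclusion {C D : Category} (R : Functor D C) : Prop :=
  Topos C /\ Topos D /\ FullyFaithful R /\
  exists (L : Functor C D) (eta : forall x : C, Hom x (fobj R (fobj L x))),
    LeftAdjointUnit L R eta /\ PreservesFiniteLimits L.

Definition FullSub (C : Category) (P : C -> Prop) : Category.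
Proof.
  refine {| Obj := {x : C | P x};
            Hom := fun x y => Hom (proj1_sig x) (proj1_sig y);
            idm := fun x => idm (proj1_sig x);
            cmp := fun x y z g f => g ∘ f |}.
  - intros; apply cmp_idl.
  - intros; apply cmp_idr.
  - intros; apply cmp_assoc.
Defined.

Definition Incl (C : Category) (P : C -> Prop) : Functor (FullSub C P) C.
Proof.
  refine {| fobj := fun x : FullSub C P => proj1_sig x;
            fmap := fun (x y : FullSub C P) (f : @Hom (FullSub C P) x y) => (f : Hom (proj1_sig x) (proj1_sig y)) |}; reflexivity.
Defined.

Lemma sig_eq_pi {A : Type} {P : A -> Prop} (u v : {a : A | P a}) :
  proj1_sig u = proj1_sig v -> u = v.
Proof.
  destruct u as [a pa], v as [b pb]; simpl; intros ->.
  f_equal; apply proof_irrelevance.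
Qed.

Lemma slice_cmp_proof (C : Category) (c : C) (X Y Z : {x : C & Hom x c})
  (g : {h : Hom (projT1 Y) (projT1 Z) | projT2 Z ∘ h = projT2 Y})
  (f : {h : Hom (projT1 X) (projT1 Y) | projT2 Y ∘ h = projT2 X}) :
  projT2 Z ∘ (proj1_sig g ∘ proj1_sig f) = projT2 X.
Proof.
  destruct g as [g eg], f as [f ef]; simpl.
  rewrite <- cmp_assoc, eg; exact ef.
Qed.

Definition Slice (C : Category) (c : C) : Category.
Proof.
  refine {| Obj := {x : C & Hom x c};
            Hom := fun X Y => {h : Hom (projT1 X) (projT1 Y) | projT2 Y ∘ h = projT2 X};
            idm := fun X => exist _ (idm (projT1 X)) (cmp_idr _ _ _ (projT2 X));
            cmp := fun X Y Z g f =>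
              exist _ (proj1_sig g ∘ proj1_sig f) (slice_cmp_proof C c X Y Z g f) |}.
  - intros; apply sig_eq_pi; simpl; apply cmp_idl.
  - intros; apply sig_eq_pi; simpl; apply cmp_idr.
  - intros; apply sig_eq_pi; simpl; apply cmp_assoc.
Defined.

Polymorphic Cumulative Record Bundle@{i} := mkB {
  tot : Type@{i}; base : Type@{i}; proj : tot -> base }.

Polymorphic Cumulative Record BHom (X Y : Bundle) := mkBH {
  top : tot X -> tot Y;
  bot : base X -> base Y;
  sq : forall e, proj Y (top e) = bot (proj X e) }.

Arguments top {X Y} _ _.
Arguments bot {X Y} _ _.
Arguments sq {X Y} _ _.

Lemma BHom_eq {X Y : Bundle} (g h : BHom X Y) :
  top g = top h -> bot g = bot h -> g = h.
Proof.
  destruct g as [t1 b1 s1], h as [t2 b2 s2]; simpl; intros -> ->.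
  f_equal; apply proof_irrelevance.
Qed.

Lemma bhom_cmp_sq (X Y Z : Bundle) (g : BHom Y Z) (f : BHom X Y) :
  forall e, proj Z (top g (top f e)) = bot g (bot f (proj X e)).
Proof. intros e; rewrite (sq g), (sq f); reflexivity. Qed.

Definition SetArr : Category.
Proof.
  refine {| Obj := Bundle;
            Hom := BHom;
            idm := fun X => mkBH X X (fun e => e) (fun b => b) (fun e => eq_refl);
            cmp := fun X Y Z g f =>
              mkBH X Z (fun e => top g (top f e)) (fun b => bot g (bot f b))
                   (bhom_cmp_sq X Y Z g f) |}.
  - intros; apply BHom_eq; reflexivity.
  - intros; apply BHom_eq; reflexivity.
  - intros; apply BHom_eq; reflexivity.
Defined.

Definition SetArrSlice {E B : Type} (pi : E -> B) : Category :=
  Slice SetArr (mkB E B pi).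

Definition CartesianOver {E B : Type} (pi : E -> B) (X : SetArrSlice pi) : Prop :=
  @IsPullback TypeCat (base (projT1 X)) E B (bot (projT2 X)) pi
    (tot (projT1 X)) (proj (projT1 X)) (top (projT2 X)).

Definition SetArrCartSlice {E B : Type} (pi : E -> B) : Category :=
  FullSub (SetArrSlice pi) (CartesianOver pi).

Definition SetArrInclusion {E B : Type} (pi : E -> B) :
  Functor (SetArrCartSlice pi) (SetArrSlice pi) :=
  Incl (SetArrSlice pi) (CartesianOver pi).

Definition PBbundle {E B : Type} (pi : E -> B) (X : SetArrSlice pi) : Bundle :=
  mkB {p : base (projT1 X) * E | bot (projT2 X) (fst p) = pi (snd p)}
      (base (projT1 X)) (fun p => fst (proj1_sig p)).

Definition PBmap {E B : Type} (pi : E -> B) (X : SetArrSlice pi) :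
  BHom (PBbundle pi X) (mkB E B pi) :=
  mkBH (PBbundle pi X) (mkB E B pi)
       (fun p => snd (proj1_sig p)) (bot (projT2 X))
       (fun p => eq_sym (proj2_sig p)).

Lemma PB_cartesian {E B : Type} (pi : E -> B) (X : SetArrSlice pi) :
  CartesianOver pi (existT _ (PBbundle pi X) (PBmap pi X)).
Proof.
  split.
  - apply functional_extensionality; intros [p hp]; exact hp.
  - intros Z q1 q2 hq.
    assert (hz : forall z, bot (projT2 X) (q1 z) = pi (q2 z))
      by (intros z; exact (f_equal (fun k => k z) hq)).
    exists (fun z => exist _ (q1 z, q2 z) (hz z)); split; [split; reflexivity|].
    intros h' [h1 h2]; subst q1 q2; apply functional_extensionality; intros z.
    apply sig_eq_pi; simpl; destruct (h' z) as [[b e] p]; reflexivity.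
Qed.

Definition PBobj {E B : Type} (pi : E -> B) (X : SetArrSlice pi) : SetArrCartSlice pi :=
  exist _ (existT _ (PBbundle pi X) (PBmap pi X)) (PB_cartesian pi X).

Definition PBunitB {E B : Type} (pi : E -> B) (X : SetArrSlice pi) :
  BHom (projT1 X) (PBbundle pi X) :=
  mkBH (projT1 X) (PBbundle pi X)
       (fun e => exist _ (proj (projT1 X) e, top (projT2 X) e)
                         (eq_sym (sq (projT2 X) e)))
       (fun b => b) (fun e => eq_refl).

Definition PBunit {E B : Type} (pi : E -> B) (X : SetArrSlice pi) :
  @Hom (SetArrSlice pi) X (fobj (SetArrInclusion pi) (PBobj pi X)).
Proof.
  exists (PBunitB pi X).
  apply BHom_eq; reflexivity.
Defined.

Polymorphic Cumulative Record FunctorOn {C D : Category} (F0 : C -> D) := {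
  fo_map : forall x y, Hom x y -> Hom (F0 x) (F0 y);
  fo_id : forall x, fo_map x x (idm x) = idm (F0 x);
  fo_cmp : forall x y z (g : Hom y z) (f : Hom x y),
      fo_map x z (g ∘ f) = fo_map y z g ∘ fo_map x y f }.

Arguments fo_map {C D F0} M {x y} f : rename.
Arguments fo_id {C D F0} M x : rename.
Arguments fo_cmp {C D F0} M {x y z} g f : rename.

Definition toFunctor {C D : Category} {F0 : C -> D} (M : FunctorOn F0) : Functor C D :=
  {| fobj := F0; fmap := fun x y => @fo_map C D F0 M x y; fmap_id := fo_id M;
     fmap_cmp := fun x y z => @fo_cmp C D F0 M x y z |}.

Definition Dirichlet@{i j + | i < j +} (F : Functor (op TypeCat@{i j}) TypeCat@{i j}) : Prop :=
  forall J : Category@{i i}, ConnectedCat J ->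
    forall (G : Functor J (op TypeCat@{i j})) (c : op TypeCat@{i j})
           (l : forall k, @Hom (op TypeCat@{i j}) c (fobj G k)),
      IsLimit G c l -> IsLimit (FComp G F) (fobj F c) (fun k => fmap F (l k)).

Lemma NatTrans_eq {C D : Category} {F G : Functor C D} (a b : NatTrans F G) :
  (forall x, ncomp a x = ncomp b x) -> a = b.
Proof.
  destruct a as [a na], b as [b nb]; simpl; intros H.
  assert (a = b) by (apply functional_extensionality_dep; exact H).
  subst b; f_equal; apply proof_irrelevance.
Qed.

Definition DirObj : Type :=
  {F : Functor (op TypeCat) TypeCat | Dirichlet F}.

Definition NTid {C D : Category} (F : Functor C D) : NatTrans F F.
Proof.
  refine {| ncomp := fun x => idm (fobj F x) |}.
  intros x y f; rewrite cmp_idl, cmp_idr; reflexivity.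
Defined.

Definition NTcmp {C D : Category} {F G H : Functor C D}
  (b : NatTrans G H) (a : NatTrans F G) : NatTrans F H.
Proof.
  refine {| ncomp := fun x => ncomp b x ∘ ncomp a x |}.
  intros x y f.
  rewrite <- cmp_assoc, (nnat _ _ b), cmp_assoc, (nnat _ _ a), cmp_assoc.
  reflexivity.
Defined.

Definition Dir : Category.
Proof.
  refine {| Obj := DirObj;
            Hom := fun F G => NatTrans (proj1_sig F) (proj1_sig G);
            idm := fun F => NTid (proj1_sig F);
            cmp := fun F G H b a => NTcmp b a |}.
  - intros; apply NatTrans_eq; intros; reflexivity.
  - intros; apply NatTrans_eq; intros; reflexivity.
  - intros; apply NatTrans_eq; intros; reflexivity.
Defined.

Definition DirSlice (D : DirObj) : Category := Slice Dir D.

Definition CartesianNT {F G : Functor (op TypeCat) TypeCat}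
  (a : NatTrans F G) : Prop :=
  forall (A A' : op TypeCat) (f : @Hom (op TypeCat) A A'),
    @IsPullback TypeCat (fobj G A) (fobj F A') (fobj G A')
      (fmap G f) (ncomp a A') (fobj F A) (ncomp a A) (fmap F f).

Definition DirCartSlice (D : DirObj) : Category :=
  FullSub (DirSlice D) (fun X => CartesianNT (projT2 X)).

Definition DirInclusion (D : DirObj) :
  Functor (DirCartSlice D) (DirSlice D) :=
  Incl (DirSlice D) (fun X => CartesianNT (projT2 X)).

(* Both slices are equivalent to toposes of set-valued functors on small categories.
   A bundle over [pi : E -> B] is the same as a family of sets indexed by [B] and [E] with
   restriction maps [X_e -> X_(pi e)].  A Dirichlet functor preserves connected limits and
   every set is, in [Set^op], a connected limit of copies of 0 and 1; so a Dirichlet functor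
   over [D] is determined by its values at 0 and 1, i.e. it is a bundle over
   [D(1) -> D(0)].  Cartesian objects are exactly those whose family is pulled back from
   the base, so they form the topos of families over [B] (resp. [D(0)]).  The pullback
   [f^* pi] is left adjoint to the inclusion, and under these equivalences it becomes the
   functor forgetting the [E]-part of a family, which is itself a right adjoint and hence
   left exact. *)

From Stdlib Require Import List Relations FunctionalExtensionality ProofIrrelevance
  PropExtensionality ClassicalEpsilon.

Set Universe Polymorphism.
Unset Universe Minimization ToSet.

Definition choose {A : Type} {P : A -> Prop} (H : exists x, P x) : A :=
  proj1_sig (constructive_indefinite_description P H).

Lemma choose_spec {A : Type} {P : A -> Prop} (H : exists x, P x) : P (choose H).
Proof. exact (proj2_sig (constructive_indefinite_description P H)). Qed.

(** * Equivalences transfer finite limits and topos structure *)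

Lemma cmp_retract_cancel {C : Category} {w x y : C} (g : Hom x y) (f : Hom y x) (h : Hom w y) :
  g ∘ f = idm y -> g ∘ (f ∘ h) = h.
Proof. intros E; rewrite <- cmp_assoc, E, cmp_idl; reflexivity. Qed.

Lemma fmap_cmp_fold {C D : Category} (F : Functor C D) {x y z : C} (g : Hom y z) (f : Hom x y) :
  fmap F g ∘ fmap F f = fmap F (g ∘ f).
Proof. symmetry; apply fmap_cmp. Qed.

Lemma IsLimit_ext {J C : Category} (G : Functor J C) c (l l' : forall j, Hom c (fobj G j)) :
  (forall j, l j = l' j) -> IsLimit G c l -> IsLimit G c l'.
Proof.
  intros E; assert (l = l') by (apply functional_extensionality_dep; exact E); subst; auto.
Qed.

Lemma IsLimit_vertex_iso {J C : Category} (G : Functor J C) (c c' : C) (l : forall j, Hom c (fobj G j))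
  (phi : Hom c' c) (psi : Hom c c') : psi ∘ phi = idm c' -> phi ∘ psi = idm c ->
  IsLimit G c l -> IsLimit G c' (fun j => l j ∘ phi).
Proof.
  intros E1 E2 [Hc Hu]; split.
  - intros j j' u; rewrite <- cmp_assoc, Hc; reflexivity.
  - intros d m Hm; destruct (Hu d m Hm) as [h [Hh Hun]].
    exists (psi ∘ h); split.
    + intros j; rewrite cmp_assoc, (cmp_retract_cancel phi psi h E2); apply Hh.
    + intros h' Hh'.
      assert (phi ∘ h' = h) by (apply Hun; intros j; rewrite <- cmp_assoc; apply Hh').
      subst h; rewrite (cmp_retract_cancel psi phi h' E1); reflexivity.
Qed.

Lemma IsLimit_natiso {J C : Category} (G G' : Functor J C)
  (th : forall j, Hom (fobj G j) (fobj G' j)) (thi : forall j, Hom (fobj G' j) (fobj G j))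
  (Hnat : forall j j' (u : Hom j j'), fmap G' u ∘ th j = th j' ∘ fmap G u)
  (Hi1 : forall j, thi j ∘ th j = idm _) (Hi2 : forall j, th j ∘ thi j = idm _)
  c l : IsLimit G c l -> IsLimit G' c (fun j => th j ∘ l j).
Proof.
  intros [Hc Hu].
  assert (Hnati : forall j j' (u : Hom j j'), fmap G u ∘ thi j = thi j' ∘ fmap G' u).
  { intros j j' u.
    transitivity (thi j' ∘ (th j' ∘ (fmap G u ∘ thi j))).
    { rewrite <- cmp_assoc, Hi1, cmp_idl; reflexivity. }
    rewrite <- (cmp_assoc _ _ _ _ _ (th j') (fmap G u)), <- Hnat, cmp_assoc, Hi2, cmp_idr.
    reflexivity. }
  split.
  - intros j j' u; rewrite <- cmp_assoc, Hnat, cmp_assoc, Hc; reflexivity.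
  - intros d m Hm.
    assert (Hm' : IsCone G d (fun j => thi j ∘ m j)).
    { intros j j' u; rewrite <- cmp_assoc, Hnati, cmp_assoc, Hm; reflexivity. }
    destruct (Hu d _ Hm') as [h [Hh Uh]].
    exists h; split.
    + intros j; rewrite cmp_assoc, Hh; apply cmp_retract_cancel, Hi2.
    + intros h' Hh'; apply Uh; intros j; rewrite <- (Hh' j).
      rewrite <- cmp_assoc, (cmp_retract_cancel (thi j) (th j) (l j) (Hi1 j)); reflexivity.
Qed.

Lemma IsProduct_vertex_iso {C : Category} {a b p p' : C} (pa : Hom p a) (pb : Hom p b)
  (phi : Hom p' p) (psi : Hom p p') :
  psi ∘ phi = idm _ -> phi ∘ psi = idm _ -> IsProduct pa pb -> IsProduct (pa ∘ phi) (pb ∘ phi).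
Proof.
  intros E1 E2 H x f g; destruct (H x f g) as [h [[H1 H2] U]].
  exists (psi ∘ h); split; [split|].
  - rewrite cmp_assoc, (cmp_retract_cancel phi psi h E2); assumption.
  - rewrite cmp_assoc, (cmp_retract_cancel phi psi h E2); assumption.
  - intros h' [H1' H2'].
    assert (phi ∘ h' = h) by (apply U; split; rewrite <- cmp_assoc; assumption).
    subst h; rewrite (cmp_retract_cancel psi phi h' E1); reflexivity.
Qed.

Lemma IsProduct_leg_iso {C : Category} {a b b' p : C} (pa : Hom p a) (pb : Hom p b)
  (th : Hom b b') (thi : Hom b' b) :
  thi ∘ th = idm _ -> th ∘ thi = idm _ -> IsProduct pa pb -> IsProduct pa (th ∘ pb).
Proof.
  intros E1 E2 H x f g; destruct (H x f (thi ∘ g)) as [h [[H1 H2] U]].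
  exists h; split; [split|].
  - assumption.
  - rewrite cmp_assoc, H2, (cmp_retract_cancel th thi g E2); reflexivity.
  - intros h' [H1' H2']; apply U; split; [assumption|].
    rewrite <- H2', cmp_assoc, (cmp_retract_cancel thi th _ E1); reflexivity.
Qed.

Lemma IsProduct_unique {C : Category} {a b q q' : C} (qa : Hom q a) (qb : Hom q b)
  (qa' : Hom q' a) (qb' : Hom q' b) : IsProduct qa qb -> IsProduct qa' qb' ->
  exists (phi : Hom q' q) (psi : Hom q q'),
    qa ∘ phi = qa' /\ qb ∘ phi = qb' /\ qa' ∘ psi = qa /\ qb' ∘ psi = qb /\
    psi ∘ phi = idm _ /\ phi ∘ psi = idm _.
Proof.
  intros H H'.
  destruct (H q' qa' qb') as [phi [[P1 P2] _]].
  destruct (H' q qa qb) as [psi [[S1 S2] _]].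
  exists phi, psi; repeat split; auto.
  - destruct (H' q' qa' qb') as [k [_ Uk]].
    rewrite (Uk (psi ∘ phi)), (Uk (idm _)); auto.
    + split; apply cmp_idr.
    + split; rewrite <- cmp_assoc; [rewrite S1 | rewrite S2]; assumption.
  - destruct (H q qa qb) as [k [_ Uk]].
    rewrite (Uk (phi ∘ psi)), (Uk (idm _)); auto.
    + split; apply cmp_idr.
    + split; rewrite <- cmp_assoc; [rewrite P1 | rewrite P2]; assumption.
Qed.

Lemma IsPullback_transport {C : Category} {a b b' c c' P : C} (f : Hom a c) (g : Hom b c)
  (p1 : Hom P a) (p2 : Hom P b)
  (al : Hom c c') (ali : Hom c' c) (be : Hom b' b) (bei : Hom b b') :
  ali ∘ al = idm _ -> bei ∘ be = idm _ -> be ∘ bei = idm _ ->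
  IsPullback f g P p1 p2 -> IsPullback (al ∘ f) (al ∘ g ∘ be) P p1 (bei ∘ p2).
Proof.
  intros E1 E2 E3 [Hcomm Hu]; split.
  - rewrite !cmp_assoc, (cmp_retract_cancel be bei p2 E3), Hcomm; reflexivity.
  - intros x q1 q2 Hq.
    assert (Hq' : ali ∘ ((al ∘ f) ∘ q1) = ali ∘ (((al ∘ g) ∘ be) ∘ q2)) by (rewrite Hq; reflexivity).
    rewrite !cmp_assoc in Hq'; repeat rewrite (cmp_retract_cancel ali al _ E1) in Hq'.
    destruct (Hu x q1 (be ∘ q2) Hq') as [h [[H1 H2] U]].
    exists h; split; [split|].
    + assumption.
    + rewrite cmp_assoc, H2, (cmp_retract_cancel bei be q2 E2); reflexivity.
    + intros h' [H1' H2']; apply U; split; [assumption|].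
      rewrite <- H2', cmp_assoc, (cmp_retract_cancel be bei _ E3); reflexivity.
Qed.

Definition EssentiallySurjective {C D : Category} (F : Functor C D) : Prop :=
  forall d : D, exists (c : C) (f : Hom (fobj F c) d) (g : Hom d (fobj F c)),
    g ∘ f = idm _ /\ f ∘ g = idm _.

Lemma ess_surj_of_iso {C C' D : Category} (F : Functor C D) (G : Functor C' D) (o : C' -> C)
  (to : forall c, Hom (fobj F (o c)) (fobj G c)) (from : forall c, Hom (fobj G c) (fobj F (o c))) :
  (forall c, from c ∘ to c = idm _) -> (forall c, to c ∘ from c = idm _) ->
  EssentiallySurjective G -> EssentiallySurjective F.
Proof.
  intros E1 E2 HG d; destruct (HG d) as [c [f [g [Hgf Hfg]]]].
  exists (o c), (f ∘ to c), (from c ∘ g); split.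
  - rewrite cmp_assoc, <- (cmp_assoc _ _ _ _ _ g f (to c)), Hgf, cmp_idl; apply E1.
  - rewrite cmp_assoc, <- (cmp_assoc _ _ _ _ _ (to c) (from c) g), E2, cmp_idl; apply Hfg.
Qed.

Lemma Incl_fully_faithful (C : Category) (P : C -> Prop) : FullyFaithful (Incl C P).
Proof. intros x y; split; [intros f g H; exact H | intros k; exists k; reflexivity]. Qed.

Section FullyFaithfulFunctor.
Context {C D : Category} (F : Functor C D) (HF : FullyFaithful F).

Definition ff_preimage {x y : C} (k : Hom (fobj F x) (fobj F y)) : Hom x y :=
  choose (proj2 (HF x y) k).

Lemma fmap_ff_preimage {x y : C} (k : Hom (fobj F x) (fobj F y)) : fmap F (ff_preimage k) = k.
Proof. exact (choose_spec (proj2 (HF x y) k)). Qed.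

Lemma ff_faithful {x y : C} (f g : Hom x y) : fmap F f = fmap F g -> f = g.
Proof. apply (proj1 (HF x y)). Qed.

Lemma ff_reflects_limit {J : Category} (G : Functor J C) c l :
  IsLimit (FComp G F) (fobj F c) (fun j => fmap F (l j)) -> IsLimit G c l.
Proof.
  intros [Hc Hu]; split.
  - intros j j' u; apply ff_faithful; rewrite fmap_cmp; apply (Hc j j' u).
  - intros d m Hm.
    assert (Hm' : IsCone (FComp G F) (fobj F d) (fun j => fmap F (m j))).
    { intros j j' u; cbn; rewrite fmap_cmp_fold, Hm; reflexivity. }
    destruct (Hu _ _ Hm') as [h [Hh Uh]].
    exists (ff_preimage h); split.
    + intros j; apply ff_faithful; rewrite fmap_cmp, fmap_ff_preimage; apply Hh.
    + intros h' Hh'; apply ff_faithful; rewrite fmap_ff_preimage; apply Uh.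
      intros j; rewrite <- Hh'; exact (fmap_cmp_fold F (l j) h').
Qed.

Lemma ff_reflects_product {a b p : C} (pa : Hom p a) (pb : Hom p b) :
  IsProduct (fmap F pa) (fmap F pb) -> IsProduct pa pb.
Proof.
  intros H x f g; destruct (H (fobj F x) (fmap F f) (fmap F g)) as [h [[H1 H2] U]].
  exists (ff_preimage h); split; [split|].
  - apply ff_faithful; rewrite fmap_cmp, fmap_ff_preimage; assumption.
  - apply ff_faithful; rewrite fmap_cmp, fmap_ff_preimage; assumption.
  - intros h' [H1' H2']; apply ff_faithful; rewrite fmap_ff_preimage; apply U.
    split; rewrite fmap_cmp_fold; [rewrite H1' | rewrite H2']; reflexivity.
Qed.

Lemma ff_reflects_pullback {a b c P : C} (f : Hom a c) (g : Hom b c) (p1 : Hom P a) (p2 : Hom P b) :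
  IsPullback (fmap F f) (fmap F g) (fobj F P) (fmap F p1) (fmap F p2) -> IsPullback f g P p1 p2.
Proof.
  intros [Hcomm Hu]; split.
  - apply ff_faithful; rewrite !fmap_cmp; exact Hcomm.
  - intros x q1 q2 Hq.
    assert (Hq' : fmap F f ∘ fmap F q1 = fmap F g ∘ fmap F q2)
      by (rewrite !fmap_cmp_fold, Hq; reflexivity).
    destruct (Hu (fobj F x) (fmap F q1) (fmap F q2) Hq') as [h [[H1 H2] U]].
    exists (ff_preimage h); split; [split|].
    + apply ff_faithful; rewrite fmap_cmp, fmap_ff_preimage; assumption.
    + apply ff_faithful; rewrite fmap_cmp, fmap_ff_preimage; assumption.
    + intros h' [H1' H2']; apply ff_faithful; rewrite fmap_ff_preimage; apply U.
      split; rewrite fmap_cmp_fold; [rewrite H1' | rewrite H2']; reflexivity.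
Qed.

Lemma ff_reflects_terminal (t : D) (t' : C) (phi : Hom (fobj F t') t) (psi : Hom t (fobj F t')) :
  psi ∘ phi = idm _ -> IsTerminal t -> IsTerminal t'.
Proof.
  intros E Ht x; destruct (Ht (fobj F x)) as [f0 Hf0].
  exists (ff_preimage (psi ∘ f0)); intros g; apply ff_faithful; rewrite fmap_ff_preimage.
  rewrite <- (Hf0 (phi ∘ fmap F g)), (cmp_retract_cancel psi phi _ E); reflexivity.
Qed.

Lemma lex_of_ff_cmp {B : Category} (L : Functor B C) :
  PreservesFiniteLimits (FComp L F) -> PreservesFiniteLimits L.
Proof.
  intros H J HJ G c l Hl; apply (ff_reflects_limit (FComp G L)); exact (H J HJ G c l Hl).
Qed.

End FullyFaithfulFunctor.

Section Equivalence.
Context {C D : Category} (F : Functor C D) (HF : FullyFaithful F) (HE : EssentiallySurjective F).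

Lemma equivalence_preserves_limit {J : Category} (G : Functor J C) c l :
  IsLimit G c l -> IsLimit (FComp G F) (fobj F c) (fun j => fmap F (l j)).
Proof.
  intros [Hc Hu]; split.
  - intros j j' u; cbn; rewrite fmap_cmp_fold, Hc; reflexivity.
  - intros d m Hm; cbn [FComp fobj fmap] in *; destruct (HE d) as [d' [phi [psi [E1 E2]]]].
    set (k := fun j => ff_preimage F HF (m j ∘ phi)).
    assert (Hk : IsCone G d' k).
    { intros j j' u; apply (ff_faithful F HF); unfold k; rewrite fmap_cmp, !fmap_ff_preimage.
      rewrite <- cmp_assoc; exact (f_equal (fun z => z ∘ phi) (Hm j j' u)). }
    destruct (Hu d' k Hk) as [h0 [Hh0 Uh0]].
    exists (fmap F h0 ∘ psi); split.
    + intros j; rewrite <- cmp_assoc, fmap_cmp_fold, Hh0; unfold k; rewrite fmap_ff_preimage.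
      rewrite cmp_assoc, E2, cmp_idr; reflexivity.
    + intros h' Hh'.
      assert (E : ff_preimage F HF (h' ∘ phi) = h0).
      { apply Uh0; intros j; apply (ff_faithful F HF); unfold k.
        rewrite fmap_cmp, !fmap_ff_preimage, <- cmp_assoc; simpl in Hh'; rewrite Hh'; reflexivity. }
      rewrite <- E, fmap_ff_preimage, cmp_assoc, E2, cmp_idr; reflexivity.
Qed.

Lemma equivalence_lex : PreservesFiniteLimits F.
Proof. intros J HJ G c l Hl; apply equivalence_preserves_limit; assumption. Qed.

Lemma equivalence_preserves_product {a b p : C} (pa : Hom p a) (pb : Hom p b) :
  IsProduct pa pb -> IsProduct (fmap F pa) (fmap F pb).
Proof.
  intros H z f g; destruct (HE z) as [z' [phi [psi [E1 E2]]]].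
  destruct (H z' (ff_preimage F HF (f ∘ phi)) (ff_preimage F HF (g ∘ phi))) as [h0 [[H1 H2] U]].
  exists (fmap F h0 ∘ psi); split; [split|].
  - rewrite <- cmp_assoc, fmap_cmp_fold, H1, fmap_ff_preimage, cmp_assoc, E2, cmp_idr; reflexivity.
  - rewrite <- cmp_assoc, fmap_cmp_fold, H2, fmap_ff_preimage, cmp_assoc, E2, cmp_idr; reflexivity.
  - intros h' [H1' H2'].
    assert (E : ff_preimage F HF (h' ∘ phi) = h0).
    { apply U; split; apply (ff_faithful F HF); rewrite fmap_cmp, !fmap_ff_preimage, <- cmp_assoc;
        [rewrite H1' | rewrite H2']; reflexivity. }
    rewrite <- E, fmap_ff_preimage, cmp_assoc, E2, cmp_idr; reflexivity.
Qed.

Lemma equivalence_preserves_pullback {a b c P : C} (f : Hom a c) (g : Hom b c)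
  (p1 : Hom P a) (p2 : Hom P b) :
  IsPullback f g P p1 p2 -> IsPullback (fmap F f) (fmap F g) (fobj F P) (fmap F p1) (fmap F p2).
Proof.
  intros [Hcomm Hu]; split.
  - rewrite !fmap_cmp_fold, Hcomm; reflexivity.
  - intros z q1 q2 Hq; destruct (HE z) as [z' [phi [psi [E1 E2]]]].
    assert (Hq' : f ∘ ff_preimage F HF (q1 ∘ phi) = g ∘ ff_preimage F HF (q2 ∘ phi)).
    { apply (ff_faithful F HF); rewrite !fmap_cmp, !fmap_ff_preimage, <- !cmp_assoc, Hq.
      reflexivity. }
    destruct (Hu z' _ _ Hq') as [h0 [[H1 H2] U]].
    exists (fmap F h0 ∘ psi); split; [split|].
    + rewrite <- cmp_assoc, fmap_cmp_fold, H1, fmap_ff_preimage, cmp_assoc, E2, cmp_idr.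
      reflexivity.
    + rewrite <- cmp_assoc, fmap_cmp_fold, H2, fmap_ff_preimage, cmp_assoc, E2, cmp_idr.
      reflexivity.
    + intros h' [H1' H2'].
      assert (E : ff_preimage F HF (h' ∘ phi) = h0).
      { apply U; split; apply (ff_faithful F HF); rewrite fmap_cmp, !fmap_ff_preimage, <- cmp_assoc;
          [rewrite H1' | rewrite H2']; reflexivity. }
      rewrite <- E, fmap_ff_preimage, cmp_assoc, E2, cmp_idr; reflexivity.
Qed.

Lemma equivalence_preserves_mono {s x : C} (m : Hom s x) : Mono m -> Mono (fmap F m).
Proof.
  intros Hm z u v Huv; destruct (HE z) as [z' [phi [psi [E1 E2]]]].
  assert (H : ff_preimage F HF (u ∘ phi) = ff_preimage F HF (v ∘ phi)).
  { apply Hm, (ff_faithful F HF).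
    rewrite !fmap_cmp, !fmap_ff_preimage, <- !cmp_assoc, Huv; reflexivity. }
  apply (f_equal (fmap F)) in H; rewrite !fmap_ff_preimage in H.
  rewrite <- (cmp_idr _ _ _ u), <- (cmp_idr _ _ _ v), <- E2, <- !cmp_assoc, H; reflexivity.
Qed.

Lemma finite_limits_of_equivalence : HasFiniteLimits D -> HasFiniteLimits C.
Proof.
  intros H J HJ G; destruct (H J HJ (FComp G F)) as [c [l Hl]].
  destruct (HE c) as [d0 [phi [psi [E1 E2]]]].
  pose proof (IsLimit_vertex_iso _ _ _ _ phi psi E1 E2 Hl) as H1.
  exists d0, (fun j => ff_preimage F HF (l j ∘ phi)).
  apply (ff_reflects_limit F HF); eapply IsLimit_ext; [|exact H1].
  intros j; cbv beta; rewrite fmap_ff_preimage; reflexivity.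
Qed.

Lemma cartesian_closed_of_equivalence : CartesianClosed D -> CartesianClosed C.
Proof.
  intros H a b.
  destruct (H (fobj F a) (fobj F b)) as [e [p [pa [pe [ev [Hp Hcur]]]]]].
  destruct (HE e) as [e' [phe [pse [Ee1 Ee2]]]].
  destruct (HE p) as [p' [php [psp [Ep1 Ep2]]]].
  set (pa' := ff_preimage F HF (pa ∘ php)).
  set (pe' := ff_preimage F HF ((pse ∘ pe) ∘ php)).
  set (ev' := ff_preimage F HF (ev ∘ php)).
  assert (Hpa : forall q (h : Hom q p'), fmap F (pa' ∘ h) = pa ∘ (php ∘ fmap F h)).
  { intros q h; unfold pa'; rewrite fmap_cmp, fmap_ff_preimage, cmp_assoc; reflexivity. }
  assert (Hpe : forall q (h : Hom q p'), phe ∘ fmap F (pe' ∘ h) = pe ∘ (php ∘ fmap F h)).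
  { intros q h; unfold pe'; rewrite fmap_cmp, fmap_ff_preimage, !cmp_assoc.
    apply (cmp_retract_cancel _ _ _ Ee2). }
  assert (Hev : forall q (h : Hom q p'), fmap F (ev' ∘ h) = ev ∘ (php ∘ fmap F h)).
  { intros q h; unfold ev'; rewrite fmap_cmp, fmap_ff_preimage, cmp_assoc; reflexivity. }
  exists e', p', pa', pe', ev'; split.
  - apply (ff_reflects_product F HF); unfold pa', pe'; rewrite !fmap_ff_preimage.
    apply (IsProduct_vertex_iso _ _ php psp Ep1 Ep2), (IsProduct_leg_iso _ _ pse phe Ee2 Ee1), Hp.
  - intros x q qa qx Hq f; cbv zeta.
    destruct (Hcur (fobj F x) (fobj F q) (fmap F qa) (fmap F qx)
                (equivalence_preserves_product qa qx Hq) (fmap F f)) as [g [Hg Ug]].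
    exists (ff_preimage F HF (pse ∘ g)); split.
    + intros h Hh1 Hh2; apply (ff_faithful F HF); rewrite Hev; apply Hg.
      * rewrite <- Hpa, Hh1; reflexivity.
      * rewrite <- Hpe, Hh2, fmap_cmp, fmap_ff_preimage, <- cmp_assoc.
        rewrite (cmp_retract_cancel _ _ _ Ee2); reflexivity.
    + intros g' Hg'; apply (ff_faithful F HF); rewrite fmap_ff_preimage.
      assert (E : phe ∘ fmap F g' = g).
      { apply Ug; intros h Hh1 Hh2.
        set (h0 := ff_preimage F HF (psp ∘ h)).
        assert (Eh0 : php ∘ fmap F h0 = h)
          by (unfold h0; rewrite fmap_ff_preimage; apply (cmp_retract_cancel _ _ _ Ep2)).
        assert (E0 : ev' ∘ h0 = f).
        { apply Hg'; apply (ff_faithful F HF).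
          - rewrite Hpa, Eh0; exact Hh1.
          - rewrite <- (cmp_retract_cancel _ _ (fmap F (pe' ∘ h0)) Ee1), Hpe, Eh0, Hh2.
            rewrite fmap_cmp, cmp_assoc; apply (cmp_retract_cancel _ _ _ Ee1). }
        rewrite <- Eh0, <- Hev, E0; reflexivity. }
      rewrite <- E, (cmp_retract_cancel _ _ _ Ee1); reflexivity.
Qed.

Lemma subobject_classifier_of_equivalence : HasSubobjectClassifier D -> HasSubobjectClassifier C.
Proof.
  intros [t [om [tru [Ht Hcl]]]].
  destruct (HE t) as [t' [pht [pst [Et1 Et2]]]].
  destruct (HE om) as [om' [pho [pso [Eo1 Eo2]]]].
  set (tru' := ff_preimage F HF ((pso ∘ tru) ∘ pht)).
  assert (Ht' : IsTerminal t') by exact (ff_reflects_terminal F HF t t' pht pst Et1 Ht).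
  exists t', om', tru'; split; [exact Ht'|].
  intros s x m Hm; cbv zeta.
  destruct (Hcl (fobj F s) (fobj F x) (fmap F m) (equivalence_preserves_mono m Hm))
    as [chi [Hchi Uchi]].
  exists (ff_preimage F HF (pso ∘ chi)); split.
  - intros bang; apply (ff_reflects_pullback F HF); unfold tru'; rewrite !fmap_ff_preimage.
    pose proof (IsPullback_transport _ _ _ _ pso pho pht pst Eo2 Et1 Et2
                  (Hchi (pht ∘ fmap F bang))) as P.
    rewrite (cmp_retract_cancel _ _ _ Et1) in P; exact P.
  - intros chi' Hchi'; apply (ff_faithful F HF); rewrite fmap_ff_preimage.
    assert (E : pho ∘ fmap F chi' = chi).
    { apply Uchi; intros bangD; destruct (Ht' s) as [b0 _].
      pose proof (equivalence_preserves_pullback _ _ _ _ (Hchi' b0)) as P.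
      unfold tru' in P; rewrite fmap_ff_preimage in P.
      pose proof (IsPullback_transport _ _ _ _ pho pso pst pht Eo1 Et2 Et1 P) as P2.
      assert (Eg : ((pho ∘ ((pso ∘ tru) ∘ pht)) ∘ pst) = tru).
      { rewrite !cmp_assoc, Et2, cmp_idr, (cmp_retract_cancel _ _ _ Eo2); reflexivity. }
      rewrite Eg in P2.
      destruct (Ht (fobj F s)) as [f0 Hf0].
      rewrite (Hf0 bangD), (Hf0 (pht ∘ fmap F b0)) in *; exact P2. }
    rewrite <- E, (cmp_retract_cancel _ _ _ Eo1); reflexivity.
Qed.

Lemma topos_of_equivalence : Topos D -> Topos C.
Proof.
  intros [H1 [H2 H3]]; split; [|split].
  - exact (finite_limits_of_equivalence H1).
  - exact (cartesian_closed_of_equivalence H2).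
  - exact (subobject_classifier_of_equivalence H3).
Qed.

End Equivalence.

Lemma lex_natiso {C D : Category} (L1 L2 : Functor C D)
  (th : forall x, Hom (fobj L1 x) (fobj L2 x)) (thi : forall x, Hom (fobj L2 x) (fobj L1 x))
  (Hnat : forall x y (f : Hom x y), fmap L2 f ∘ th x = th y ∘ fmap L1 f)
  (Hi1 : forall x, thi x ∘ th x = idm _) (Hi2 : forall x, th x ∘ thi x = idm _) :
  PreservesFiniteLimits L1 -> PreservesFiniteLimits L2.
Proof.
  intros HL J HJ G c l Hl.
  pose proof (IsLimit_natiso (FComp G L1) (FComp G L2) (fun j => th (fobj G j))
     (fun j => thi (fobj G j)) (fun j j' u => Hnat _ _ (fmap G u)) (fun j => Hi1 _)
     (fun j => Hi2 _) _ _ (HL J HJ G c l Hl)) as H.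
  eapply IsLimit_ext; [|exact (IsLimit_vertex_iso _ _ _ _ (thi c) (th c) (Hi2 c) (Hi1 c) H)].
  intros j; cbv beta; cbn [FComp fobj fmap].
  rewrite <- Hnat, cmp_assoc, Hi2, cmp_idr; reflexivity.
Qed.

Lemma lex_cmp {C D E : Category} (L : Functor C D) (F : Functor D E) :
  PreservesFiniteLimits L -> PreservesFiniteLimits F -> PreservesFiniteLimits (FComp L F).
Proof. intros HL HF J HJ G c l Hl; exact (HF J HJ (FComp G L) _ _ (HL J HJ G c l Hl)). Qed.

Lemma right_adjoint_lex {C D : Category} (L : Functor C D) (R : Functor D C) eta :
  LeftAdjointUnit L R eta -> PreservesFiniteLimits R.
Proof.
  intros [_ Hu] J HJ G c l [Hc Hl]; split.
  - intros j j' u; cbn [FComp fobj fmap]; rewrite fmap_cmp_fold, Hc; reflexivity.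
  - intros x m Hm; cbn [FComp fobj fmap] in *.
    set (n := fun j => choose (Hu x (fobj G j) (m j))).
    assert (Hn1 : forall j, fmap R (n j) ∘ eta x = m j)
      by (intros j; exact (proj1 (choose_spec (Hu x (fobj G j) (m j))))).
    assert (Hn2 : forall j h', fmap R h' ∘ eta x = m j -> h' = n j)
      by (intros j; exact (proj2 (choose_spec (Hu x (fobj G j) (m j))))).
    assert (Hcn : IsCone G (fobj L x) n).
    { intros j j' u; apply Hn2; rewrite <- fmap_cmp_fold, cmp_assoc, Hn1; apply Hm. }
    destruct (Hl _ n Hcn) as [k [Hk Uk]].
    exists (fmap R k ∘ eta x); split.
    + intros j; rewrite <- cmp_assoc, fmap_cmp_fold, Hk; apply Hn1.
    + intros h' Hh'; destruct (Hu x c h') as [k' [Hk' _]].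
      rewrite <- Hk'; do 2 f_equal; apply Uk; intros j; apply Hn2.
      rewrite <- fmap_cmp_fold, cmp_assoc, Hk'; apply Hh'.
Qed.

Lemma cartesian_closed_intro {C : Category} :
  (forall a b : C, exists (e p : C) (pa : Hom p a) (pe : Hom p e) (ev : Hom p b), IsProduct pa pe /\
     forall x : C, exists (q : C) (qa : Hom q a) (qx : Hom q x), IsProduct qa qx /\
       forall f : Hom q b,
         let Curry (g : Hom x e) : Prop :=
           forall h : Hom q p, pa ∘ h = qa -> pe ∘ h = g ∘ qx -> ev ∘ h = f in
         exists g, Curry g /\ forall g', Curry g' -> g' = g)
  -> CartesianClosed C.
Proof.
  intros H a b; destruct (H a b) as [e [p [pa [pe [ev [Hp Hx]]]]]].
  exists e, p, pa, pe, ev; split; [exact Hp|].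
  intros x q' qa' qx' Hq' f'; cbv zeta.
  destruct (Hx x) as [q [qa [qx [Hq Hf]]]].
  destruct (IsProduct_unique qa qx qa' qx' Hq Hq') as [phi [psi [H1 [H2 [H3 [H4 [H5 H6]]]]]]].
  destruct (Hf (f' ∘ psi)) as [g [Hg Ug]]; exists g; split.
  - intros h Hh1 Hh2.
    assert (E : ev ∘ (h ∘ psi) = f' ∘ psi).
    { apply Hg.
      - rewrite <- cmp_assoc, Hh1; exact H3.
      - rewrite <- cmp_assoc, Hh2, cmp_assoc, H4; reflexivity. }
    apply (f_equal (fun k => k ∘ phi)) in E; rewrite !cmp_assoc, H5, !cmp_idr in E; exact E.
  - intros g' Hg'; apply Ug; intros h Hh1 Hh2.
    assert (E : ev ∘ (h ∘ phi) = f').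
    { apply Hg'.
      - rewrite <- cmp_assoc, Hh1; exact H1.
      - rewrite <- cmp_assoc, Hh2, cmp_assoc, H2; reflexivity. }
    rewrite <- E, !cmp_assoc, H6, cmp_idr; reflexivity.
Qed.

(** * The topos of families over a map *)

(* A [Family pi] is a functor to sets on the category with objects [B + E] and one
   arrow [e -> pi e] for each [e]; it corresponds to the bundle over [pi] whose fibres
   over [b] and [e] are [at_base b] and [at_tot e]. *)
Cumulative Record Family {E B : Type} (pi : E -> B) := mkFam {
  at_base : B -> Type; at_tot : E -> Type; restr : forall e, at_tot e -> at_base (pi e) }.
Arguments mkFam {E B pi} at_base at_tot restr.
Arguments at_base {E B pi} _ _.
Arguments at_tot {E B pi} _ _.
Arguments restr {E B pi} _ {e} _.

Cumulative Record FamHom {E B : Type} {pi : E -> B} (X Y : Family pi) := mkFamHom {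
  hom_base : forall b, at_base X b -> at_base Y b;
  hom_tot : forall e, at_tot X e -> at_tot Y e;
  hom_restr : forall e y, restr Y (hom_tot e y) = hom_base (pi e) (restr X y) }.
Arguments mkFamHom {E B pi X Y} hom_base hom_tot hom_restr.
Arguments hom_base {E B pi X Y} _ {b} _.
Arguments hom_tot {E B pi X Y} _ {e} _.
Arguments hom_restr {E B pi X Y} _ e y.

Section Families.
Context {E B : Type} {pi : E -> B}.

Lemma FamHom_eq {X Y : Family pi} (f g : FamHom X Y) :
  (forall b x, hom_base f (b:=b) x = hom_base g x) ->
  (forall e y, hom_tot f (e:=e) y = hom_tot g y) -> f = g.
Proof.
  destruct f as [f1 f2 f3], g as [g1 g2 g3]; simpl; intros H1 H2.
  assert (f1 = g1) by (apply functional_extensionality_dep; intros b;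
                       apply functional_extensionality; apply H1).
  assert (f2 = g2) by (apply functional_extensionality_dep; intros e;
                       apply functional_extensionality; apply H2).
  subst; f_equal; apply proof_irrelevance.
Qed.

Lemma hom_base_congr {X Y : Family pi} {f g : FamHom X Y} :
  f = g -> forall b x, hom_base f (b:=b) x = hom_base g x.
Proof. intros ->; reflexivity. Qed.

Lemma hom_tot_congr {X Y : Family pi} {f g : FamHom X Y} :
  f = g -> forall e y, hom_tot f (e:=e) y = hom_tot g y.
Proof. intros ->; reflexivity. Qed.

Definition FamHom_cmp {X Y Z : Family pi} (g : FamHom Y Z) (f : FamHom X Y) : FamHom X Z.
Proof.
  refine (mkFamHom (fun b x => hom_base g (hom_base f x)) (fun e y => hom_tot g (hom_tot f y)) _).
  intros e y; rewrite (hom_restr g), (hom_restr f); reflexivity.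
Defined.

End Families.

Definition FamCat {E B : Type} (pi : E -> B) : Category.
Proof.
  refine {| Obj := Family pi;
            Hom := fun X Y => FamHom X Y;
            idm := fun X => mkFamHom (fun b x => x) (fun e y => y) (fun e y => eq_refl);
            cmp := fun X Y Z g f => FamHom_cmp g f |}.
  all: intros; apply FamHom_eq; reflexivity.
Defined.

Fixpoint Pos {J : Type} (l : list J) : Type :=
  match l with nil => Empty_set | _ :: l' => option (Pos l') end.

Fixpoint objAt {J : Type} (l : list J) : Pos l -> J :=
  match l return Pos l -> J with
  | nil => fun p => match p with end
  | x :: l' => fun p => match p with None => x | Some p' => objAt l' p' end
  end.

Lemma objAt_In {J : Type} (l : list J) (j : J) : In j l -> exists p, objAt l p = j.
Proof.
  induction l as [|x l IH]; simpl; [intros []|].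
  intros [-> | H]; [exists None; reflexivity|].
  destruct (IH H) as [p Hp]; exists (Some p); exact Hp.
Qed.

Definition eq_hom {C : Category} {x y : C} (e : x = y) : Hom x y :=
  match e in _ = y' return Hom x y' with eq_refl => idm x end.

Lemma eq_hom_sym {C : Category} {x y : C} (e : x = y) : eq_hom e ∘ eq_hom (eq_sym e) = idm y.
Proof. destruct e; apply cmp_idl. Qed.

Section FamLimit.
Context {E B : Type} {pi : E -> B} {J : Category} (lo : list J) (G : Functor J (FamCat pi)).

(* Indexing by the positions of the list [lo] of all objects, rather than by [J] itself,
   keeps the limit in the universe of the families. *)
Definition fam_limit : Family pi.
Proof.
  refine (mkFam
    (fun b => {t : forall p, at_base (fobj G (objAt lo p)) b |
                 forall p q (a : Hom (objAt lo p) (objAt lo q)), hom_base (fmap G a) (t p) = t q})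
    (fun e => {t : forall p, at_tot (fobj G (objAt lo p)) e |
                 forall p q (a : Hom (objAt lo p) (objAt lo q)), hom_tot (fmap G a) (t p) = t q})
    (fun e t => exist _ (fun p => restr (fobj G (objAt lo p)) (proj1_sig t p)) _)).
  intros p q a; rewrite <- (hom_restr (fmap G a)); f_equal; apply (proj2_sig t).
Defined.

Definition fam_limit_proj (p : Pos lo) : @Hom (FamCat pi) fam_limit (fobj G (objAt lo p)) :=
  @mkFamHom _ _ pi fam_limit (fobj G (objAt lo p))
    (fun b t => proj1_sig t p) (fun e t => proj1_sig t p) (fun e t => eq_refl).

Lemma fam_limit_proj_compat p q (a : Hom (objAt lo p) (objAt lo q)) :
  fmap G a ∘ fam_limit_proj p = fam_limit_proj q.
Proof. apply FamHom_eq; intros ? t; exact (proj2_sig t p q a). Qed.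

Lemma fam_limit_proj_ext {X : Family pi} (h h' : @Hom (FamCat pi) X fam_limit) :
  (forall p, fam_limit_proj p ∘ h = fam_limit_proj p ∘ h') -> h = h'.
Proof.
  intros H; apply FamHom_eq; intros ? x; apply sig_eq_pi; apply functional_extensionality_dep;
    intros p; [exact (hom_base_congr (H p) _ x) | exact (hom_tot_congr (H p) _ x)].
Qed.

Lemma fam_limit_mediate (X : Family pi) (m : forall j, @Hom (FamCat pi) X (fobj G j)) :
  IsCone G X m -> exists h, forall p, fam_limit_proj p ∘ h = m (objAt lo p).
Proof.
  intros Hm.
  unshelve eexists (@mkFamHom _ _ pi X fam_limit
    (fun b x => exist _ (fun p => hom_base (m (objAt lo p)) x) _)
    (fun e y => exist _ (fun p => hom_tot (m (objAt lo p)) y) _) _).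
  - intros p q a; exact (hom_base_congr (Hm _ _ a) _ x).
  - intros p q a; exact (hom_tot_congr (Hm _ _ a) _ y).
  - intros e y; apply sig_eq_pi, functional_extensionality_dep; intros p.
    apply (hom_restr (m (objAt lo p))).
  - intros p; apply FamHom_eq; reflexivity.
Qed.

Variable Hlo : forall j : J, In j lo.

Definition pos_of (j : J) : Pos lo := choose (objAt_In lo j (Hlo j)).
Definition objAt_pos_of (j : J) : objAt lo (pos_of j) = j := choose_spec (objAt_In lo j (Hlo j)).

Definition fam_limit_leg (j : J) : @Hom (FamCat pi) fam_limit (fobj G j) :=
  fmap G (eq_hom (objAt_pos_of j)) ∘ fam_limit_proj (pos_of j).

Lemma fam_limit_leg_objAt p : fam_limit_leg (objAt lo p) = fam_limit_proj p.
Proof. apply fam_limit_proj_compat. Qed.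

Lemma fam_limit_isLimit : IsLimit G fam_limit fam_limit_leg.
Proof.
  split.
  - intros j j' a; unfold fam_limit_leg.
    set (a' := eq_hom (eq_sym (objAt_pos_of j')) ∘ (a ∘ eq_hom (objAt_pos_of j))).
    rewrite <- (fam_limit_proj_compat _ _ a'), <- !cmp_assoc, !fmap_cmp_fold.
    unfold a'; rewrite <- cmp_assoc, eq_hom_sym, cmp_idl; reflexivity.
  - intros X m Hm; destruct (fam_limit_mediate X m Hm) as [h Hh].
    assert (Hleg : forall h', (forall j, fam_limit_leg j ∘ h' = m j) -> h' = h).
    { intros h' Hh'; apply fam_limit_proj_ext; intros p.
      rewrite Hh, <- Hh', fam_limit_leg_objAt; reflexivity. }
    exists h; split; [|exact Hleg].
    intros j; unfold fam_limit_leg; rewrite cmp_assoc, Hh.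
    apply (Hm _ _ (eq_hom (objAt_pos_of j))).
Qed.

End FamLimit.

Lemma FamCat_finite_limits {E B : Type} (pi : E -> B) : HasFiniteLimits (FamCat pi).
Proof.
  intros J [[lo Hlo] _] G; exists (fam_limit lo G), (fam_limit_leg lo G Hlo).
  apply fam_limit_isLimit.
Qed.

Section FamToposStructure.
Context {E B : Type} {pi : E -> B}.

Definition fam_prod (X Z : Family pi) : Family pi :=
  mkFam (fun b => (at_base X b * at_base Z b)%type) (fun e => (at_tot X e * at_tot Z e)%type)
        (fun e y => (restr X (fst y), restr Z (snd y))).

Definition fam_fst (X Z : Family pi) : @Hom (FamCat pi) (fam_prod X Z) X :=
  @mkFamHom _ _ pi (fam_prod X Z) X (fun b x => fst x) (fun e y => fst y) (fun e y => eq_refl).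

Definition fam_snd (X Z : Family pi) : @Hom (FamCat pi) (fam_prod X Z) Z :=
  @mkFamHom _ _ pi (fam_prod X Z) Z (fun b x => snd x) (fun e y => snd y) (fun e y => eq_refl).

Definition fam_pair {W X Z : Family pi} (f : FamHom W X) (g : FamHom W Z) :
  @Hom (FamCat pi) W (fam_prod X Z).
Proof.
  refine (@mkFamHom _ _ pi W (fam_prod X Z) (fun b w => (hom_base f w, hom_base g w))
            (fun e w => (hom_tot f w, hom_tot g w)) _).
  intros e y; simpl; rewrite (hom_restr f), (hom_restr g); reflexivity.
Defined.

Lemma fam_prod_isProduct (X Z : Family pi) : IsProduct (fam_fst X Z) (fam_snd X Z).
Proof.
  intros W f g; exists (fam_pair f g); split; [split; apply FamHom_eq; reflexivity|].
  intros h' [E1 E2]; apply FamHom_eq; intros ? w; simpl.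
  - rewrite <- (hom_base_congr E1 _ w), <- (hom_base_congr E2 _ w).
    simpl; destruct (hom_base h' w); reflexivity.
  - rewrite <- (hom_tot_congr E1 _ w), <- (hom_tot_congr E2 _ w).
    simpl; destruct (hom_tot h' w); reflexivity.
Qed.

(* Over [e] an element of the exponential is a morphism of the restrictions of [X] and [Z]
   to the two-object category [e -> pi e]. *)
Definition fam_exp (X Z : Family pi) : Family pi :=
  mkFam (fun b => at_base X b -> at_base Z b)
        (fun e => {hg : (at_tot X e -> at_tot Z e) * (at_base X (pi e) -> at_base Z (pi e)) |
                     forall y, restr Z (fst hg y) = snd hg (restr X y)})
        (fun e w => snd (proj1_sig w)).

Definition fam_eval (X Z : Family pi) : @Hom (FamCat pi) (fam_prod X (fam_exp X Z)) Z.
Proof.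
  refine (@mkFamHom _ _ pi (fam_prod X (fam_exp X Z)) Z (fun b xg => snd xg (fst xg))
            (fun e yw => fst (proj1_sig (snd yw)) (fst yw)) _).
  intros e [y w]; apply (proj2_sig w).
Defined.

Definition fam_curry (X Z W : Family pi) (f : FamHom (fam_prod X W) Z) :
  @Hom (FamCat pi) W (fam_exp X Z).
Proof.
  unshelve refine (@mkFamHom _ _ pi W (fam_exp X Z) (fun b w xa => hom_base f (xa, w))
    (fun e w => exist _ (fun y => hom_tot f (y, w), fun xa => hom_base f (xa, restr W w)) _) _).
  - intros y; apply (hom_restr f e (y, w)).
  - intros e w; reflexivity.
Defined.

Lemma fam_curry_spec (X Z W : Family pi) (f : FamHom (fam_prod X W) Z)
  (h : @Hom (FamCat pi) (fam_prod X W) (fam_prod X (fam_exp X Z))) :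
  fam_fst X (fam_exp X Z) ∘ h = fam_fst X W ->
  fam_snd X (fam_exp X Z) ∘ h = fam_curry X Z W f ∘ fam_snd X W ->
  fam_eval X Z ∘ h = f.
Proof.
  intros Hh1 Hh2; apply FamHom_eq; intros ? [x w].
  - pose proof (hom_base_congr Hh1 _ (x, w)) as E1; pose proof (hom_base_congr Hh2 _ (x, w)) as E2.
    simpl in *; rewrite E1, E2; reflexivity.
  - pose proof (hom_tot_congr Hh1 _ (x, w)) as E1; pose proof (hom_tot_congr Hh2 _ (x, w)) as E2.
    simpl in *; rewrite E1, E2; reflexivity.
Qed.

Lemma fam_curry_unique (X Z W : Family pi) (f : FamHom (fam_prod X W) Z)
  (g : @Hom (FamCat pi) W (fam_exp X Z)) :
  fam_eval X Z ∘ fam_pair (fam_fst X W) (g ∘ fam_snd X W) = f -> g = fam_curry X Z W f.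
Proof.
  intros Hev; apply FamHom_eq.
  - intros b w; apply functional_extensionality; intros x; exact (hom_base_congr Hev _ (x, w)).
  - intros e w; apply sig_eq_pi; simpl.
    pose proof (hom_restr g e w) as Hr; simpl in Hr.
    assert (Etot : forall y, fst (proj1_sig (hom_tot g w)) y = hom_tot f (y, w))
      by (intros y; exact (hom_tot_congr Hev _ (y, w))).
    assert (Ebase : snd (proj1_sig (hom_tot g w)) = fun x => hom_base f (x, restr W w)).
    { rewrite Hr; apply functional_extensionality; intros x.
      exact (hom_base_congr Hev _ (x, restr W w)). }
    destruct (hom_tot g w) as [[g1 g2] Hg]; simpl in *; f_equal.
    + apply functional_extensionality; exact Etot.
    + exact Ebase.
Qed.

Definition fam_one : Family pi := mkFam (fun _ => unit) (fun _ => unit) (fun _ _ => tt).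

Definition fam_bang (X : Family pi) : @Hom (FamCat pi) X fam_one :=
  @mkFamHom _ _ pi X fam_one (fun _ _ => tt) (fun _ _ => tt) (fun _ _ => eq_refl).

Lemma fam_bang_unique (X : Family pi) (g : @Hom (FamCat pi) X fam_one) : g = fam_bang X.
Proof.
  apply FamHom_eq; intros; simpl; [destruct (hom_base g x) | destruct (hom_tot g y)]; reflexivity.
Qed.

Lemma fam_one_terminal : IsTerminal (C:=FamCat pi) fam_one.
Proof. intros X; exists (fam_bang X); apply fam_bang_unique. Qed.

(* Truth values over [e] are the three sieves on [e]: the pair records whether [e] and
   whether [pi e] belong to the sieve. *)
Definition fam_omega : Family pi :=
  mkFam (fun _ => Prop) (fun _ => {v : Prop * Prop | fst v -> snd v}) (fun e v => snd (proj1_sig v)).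

Definition fam_true : @Hom (FamCat pi) fam_one fam_omega :=
  @mkFamHom _ _ pi fam_one fam_omega (fun b _ => True)
    (fun e _ => exist (fun v : Prop * Prop => fst v -> snd v) (True, True) (fun t => t))
    (fun e y => eq_refl).

Definition fam_char {S X : Family pi} (m : FamHom S X) : @Hom (FamCat pi) X fam_omega.
Proof.
  refine (@mkFamHom _ _ pi X fam_omega (fun b x => exists s, hom_base m s = x)
    (fun e y => exist _ (exists s, hom_tot m s = y, exists s, hom_base m s = restr X y) _)
    (fun e y => eq_refl)).
  intros [s Hs]; exists (restr S s); rewrite <- (hom_restr m), Hs; reflexivity.
Defined.

Lemma prop_eq_True (P : Prop) : P -> P = True.
Proof. intros p; apply propositional_extensionality; split; auto. Qed.

Lemma prop_of_eq_True (P : Prop) : P = True -> P.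
Proof. intros ->; exact I. Qed.

(* The representables at [b0] and [e0]: maps out of them pick elements of a family. *)
Definition rep_base (b0 : B) : Family pi :=
  mkFam (fun b => b0 = b) (fun e => Empty_set) (fun e y => match y with end).

Definition rep_tot (e0 : E) : Family pi :=
  mkFam (fun b => pi e0 = b) (fun e => e0 = e) (fun e H => f_equal pi H).

Definition elt_base (X : Family pi) (b0 : B) (x : at_base X b0) :
  @Hom (FamCat pi) (rep_base b0) X :=
  @mkFamHom _ _ pi (rep_base b0) X (fun b H => eq_rect b0 (at_base X) x b H)
    (fun e y => match y with end) (fun e y => match y with end).

Definition elt_tot (X : Family pi) (e0 : E) (y : at_tot X e0) :
  @Hom (FamCat pi) (rep_tot e0) X.
Proof.
  refine (@mkFamHom _ _ pi (rep_tot e0) X (fun b H => eq_rect (pi e0) (at_base X) (restr X y) b H)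
            (fun e H => eq_rect e0 (at_tot X) y e H) _).
  intros e H; destruct H; reflexivity.
Defined.

Lemma fam_mono_injective {S X : Family pi} (m : @Hom (FamCat pi) S X) :
  Mono m -> (forall b (s1 s2 : at_base S b), hom_base m s1 = hom_base m s2 -> s1 = s2) /\
            (forall e (s1 s2 : at_tot S e), hom_tot m s1 = hom_tot m s2 -> s1 = s2).
Proof.
  intros Hm; split.
  - intros b s1 s2 Hs.
    assert (E0 : elt_base S b s1 = elt_base S b s2).
    { apply Hm, FamHom_eq; [intros b' H; destruct H; exact Hs | intros e []]. }
    exact (hom_base_congr E0 _ (eq_refl b)).
  - intros e s1 s2 Hs.
    assert (E0 : elt_tot S e s1 = elt_tot S e s2).
    { apply Hm, FamHom_eq.
      - intros b' H; destruct H; simpl; rewrite <- !(hom_restr m), Hs; reflexivity.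
      - intros e' H; destruct H; exact Hs. }
    exact (hom_tot_congr E0 _ (eq_refl e)).
Qed.

End FamToposStructure.

Lemma FamCat_cartesian_closed {E B : Type} (pi : E -> B) : CartesianClosed (FamCat pi).
Proof.
  apply cartesian_closed_intro; intros X Z.
  exists (fam_exp X Z), (fam_prod X (fam_exp X Z)), (fam_fst _ _), (fam_snd _ _), (fam_eval X Z).
  split; [apply fam_prod_isProduct|].
  intros W; exists (fam_prod X W), (fam_fst _ _), (fam_snd _ _); split; [apply fam_prod_isProduct|].
  intros f; exists (fam_curry X Z W f); split.
  - intros h; apply fam_curry_spec.
  - intros g Hg; apply fam_curry_unique, Hg; apply FamHom_eq; reflexivity.
Qed.

Section FamClassifier.
Context {E B : Type} {pi : E -> B} {S X : Family pi} (m : @Hom (FamCat pi) S X) (Hm : Mono m).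

Lemma fam_char_pullback (bang : @Hom (FamCat pi) S fam_one) :
  IsPullback (fam_char m) fam_true S m bang.
Proof.
  destruct (fam_mono_injective m Hm) as [IX IY]; split.
  - apply FamHom_eq.
    + intros b s; apply prop_eq_True; exists s; reflexivity.
    + intros e s; apply sig_eq_pi; simpl; f_equal; apply prop_eq_True.
      * exists s; reflexivity.
      * exists (restr S s); symmetry; apply (hom_restr m).
  - intros Z q1 q2 Hq.
    assert (EX : forall b (z : at_base Z b), exists s, hom_base m s = hom_base q1 z)
      by (intros b z; exact (prop_of_eq_True _ (hom_base_congr Hq _ z))).
    assert (EY : forall e (z : at_tot Z e), exists s, hom_tot m s = hom_tot q1 z).
    { intros e z; apply prop_of_eq_True.
      exact (f_equal (fun v => fst (proj1_sig v)) (hom_tot_congr Hq _ z)). }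
    unshelve eexists (@mkFamHom _ _ pi Z S (fun b z => choose (EX b z))
                        (fun e z => choose (EY e z)) _).
    { intros e z; apply IX; rewrite <- (hom_restr m), (choose_spec (EY e z)), (choose_spec (EX _ _)).
      apply (hom_restr q1). }
    split; [split|].
    + apply FamHom_eq; intros; [apply (choose_spec (EX _ _)) | apply (choose_spec (EY _ _))].
    + rewrite (fam_bang_unique _ q2); apply fam_bang_unique.
    + intros h' [H1 _]; apply FamHom_eq.
      * intros b z; simpl; apply IX; rewrite (choose_spec (EX b z)); exact (hom_base_congr H1 _ z).
      * intros e z; simpl; apply IY; rewrite (choose_spec (EY e z)); exact (hom_tot_congr H1 _ z).
Qed.

Lemma fam_classifier_base (chi : @Hom (FamCat pi) X fam_omega) :
  (forall bang, IsPullback chi fam_true S m bang) ->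
  forall b (x : at_base X b), hom_base chi x = exists s, hom_base m s = x.
Proof.
  intros Hc b x; destruct (Hc (fam_bang S)) as [Hcomm Hu].
  apply propositional_extensionality; split.
  - intros Ht.
    destruct (Hu (rep_base b) (elt_base X b x) (fam_bang _)) as [h [[H1 _] _]].
    { apply FamHom_eq; [intros b' H; destruct H; exact (prop_eq_True _ Ht) | intros e []]. }
    exists (hom_base h (eq_refl b)); exact (hom_base_congr H1 _ (eq_refl b)).
  - intros [s <-]; exact (prop_of_eq_True _ (hom_base_congr Hcomm _ s)).
Qed.

Lemma fam_char_unique (chi : @Hom (FamCat pi) X fam_omega) :
  (forall bang, IsPullback chi fam_true S m bang) -> chi = fam_char m.
Proof.
  intros Hc; pose proof (fam_classifier_base chi Hc) as Hbase.
  destruct (Hc (fam_bang S)) as [Hcomm Hu].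
  apply FamHom_eq; [exact Hbase|].
  intros e y; apply sig_eq_pi; simpl.
  pose proof (hom_restr chi e y) as Hr; simpl in Hr; rewrite Hbase in Hr.
  destruct (hom_tot chi y) as [[c1 c2] pf] eqn:Ey; simpl in *; subst c2; f_equal.
  apply propositional_extensionality; split.
  - intros Ht.
    destruct (Hu (rep_tot e) (elt_tot X e y) (fam_bang _)) as [h [[H1 _] _]].
    { apply FamHom_eq.
      - intros b' H; destruct H; simpl; rewrite Hbase; apply prop_eq_True, pf, Ht.
      - intros e' H; destruct H; simpl; rewrite Ey; apply sig_eq_pi; simpl.
        rewrite (prop_eq_True _ Ht), (prop_eq_True _ (pf Ht)); reflexivity. }
    exists (hom_tot h (eq_refl e)); exact (hom_tot_congr H1 _ (eq_refl e)).
  - intros [s Hs]; subst y; apply prop_of_eq_True.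
    pose proof (f_equal (fun v => fst (proj1_sig v)) (hom_tot_congr Hcomm _ s)) as Q.
    simpl in Q; rewrite Ey in Q; exact Q.
Qed.

End FamClassifier.

Lemma FamCat_subobject_classifier {E B : Type} (pi : E -> B) : HasSubobjectClassifier (FamCat pi).
Proof.
  exists fam_one, fam_omega, fam_true; split; [apply fam_one_terminal|].
  intros S X m Hm; cbv zeta; exists (fam_char m); split.
  - intros bang; apply fam_char_pullback, Hm.
  - intros chi H; apply fam_char_unique; assumption.
Qed.

Lemma FamCat_topos {E B : Type} (pi : E -> B) : Topos (FamCat pi).
Proof.
  split; [apply FamCat_finite_limits | split;
    [apply FamCat_cartesian_closed | apply FamCat_subobject_classifier]].
Qed.

(** * Bundles over [pi] *)

Section TypePullback.
Context {a b c P : Type} (f : a -> c) (g : b -> c) (p1 : P -> a) (p2 : P -> b).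

Lemma type_pullback_ex : @IsPullback TypeCat a b c f g P p1 p2 ->
  forall x y, f x = g y -> exists z, p1 z = x /\ p2 z = y.
Proof.
  intros [_ Hu] x y Hxy.
  destruct (Hu unit (fun _ => x) (fun _ => y)) as [h [[H1 H2] _]].
  { apply functional_extensionality; intros t; exact Hxy. }
  exists (h tt); split; [exact (f_equal (fun k => k tt) H1) | exact (f_equal (fun k => k tt) H2)].
Qed.

Lemma type_pullback_inj : @IsPullback TypeCat a b c f g P p1 p2 ->
  forall z z', p1 z = p1 z' -> p2 z = p2 z' -> z = z'.
Proof.
  intros [Hc Hu] z z' E1 E2.
  destruct (Hu unit (fun _ => p1 z) (fun _ => p2 z)) as [h [_ U]].
  { apply functional_extensionality; intros t; exact (f_equal (fun k => k z) Hc). }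
  assert (X1 : (fun _ : unit => z) = h) by (apply U; split; reflexivity).
  assert (X2 : (fun _ : unit => z') = h).
  { apply U; split; apply functional_extensionality; intros t; simpl; symmetry; assumption. }
  exact (f_equal (fun k => k tt) (eq_trans X1 (eq_sym X2))).
Qed.

Lemma type_pullback_intro :
  (forall z, f (p1 z) = g (p2 z)) ->
  (forall x y, f x = g y -> exists z, p1 z = x /\ p2 z = y) ->
  (forall z z', p1 z = p1 z' -> p2 z = p2 z' -> z = z') ->
  @IsPullback TypeCat a b c f g P p1 p2.
Proof.
  intros Hc He Hi; split.
  - apply functional_extensionality; exact Hc.
  - intros x q1 q2 Hq.
    assert (Hq' : forall t, f (q1 t) = g (q2 t)) by (intros t; exact (f_equal (fun k => k t) Hq)).
    exists (fun t => choose (He _ _ (Hq' t))); split; [split|].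
    + apply functional_extensionality; intros t; exact (proj1 (choose_spec (He _ _ (Hq' t)))).
    + apply functional_extensionality; intros t; exact (proj2 (choose_spec (He _ _ (Hq' t)))).
    + intros h' [H1 H2]; apply functional_extensionality; intros t; apply Hi.
      * rewrite (proj1 (choose_spec (He _ _ (Hq' t)))); exact (f_equal (fun k => k t) H1).
      * rewrite (proj2 (choose_spec (He _ _ (Hq' t)))); exact (f_equal (fun k => k t) H2).
Qed.

End TypePullback.

Definition from_empty (X : Type) : Empty_set -> X := fun e => match e with end.
Definition from_empty_dep {P : Empty_set -> Type} : forall e, P e := fun e => match e with end.

Lemma fibre_map_indep {B A C : Type} (f : A -> B) (g : C -> B)
  (k : forall b, {a | f a = b} -> {c | g c = b}) (x : A) (b b' : B) (p : f x = b) (p' : f x = b') :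
  proj1_sig (k b (exist _ x p)) = proj1_sig (k b' (exist _ x p')).
Proof. destruct p, p'; reflexivity. Qed.

Definition sigT_fibre_to {A : Type} (P : A -> Type) (a : A) (w : {w : sigT P | projT1 w = a}) : P a :=
  eq_rect _ P (projT2 (proj1_sig w)) a (proj2_sig w).

Definition sigT_fibre_from {A : Type} (P : A -> Type) (a : A) (x : P a) :
  {w : sigT P | projT1 w = a} := exist _ (existT P a x) eq_refl.

Lemma sigT_fibre_from_to {A : Type} (P : A -> Type) (a : A) w :
  sigT_fibre_from P a (sigT_fibre_to P a w) = w.
Proof. destruct w as [[a' x] H]; simpl in H; destruct H; reflexivity. Qed.

Section BundlesOver.
Context {E B : Type} {pi : E -> B}.

Lemma slice_hom_top {X Y : SetArrSlice pi} (h : Hom X Y) e :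
  top (projT2 Y) (top (proj1_sig h) e) = top (projT2 X) e.
Proof. exact (f_equal (fun k => top k e) (proj2_sig h)). Qed.

Lemma slice_hom_bot {X Y : SetArrSlice pi} (h : Hom X Y) x :
  bot (projT2 Y) (bot (proj1_sig h) x) = bot (projT2 X) x.
Proof. exact (f_equal (fun k => bot k x) (proj2_sig h)). Qed.

Lemma slice_hom_eq {X Y : SetArrSlice pi} (h h' : Hom X Y) :
  (forall e, top (proj1_sig h) e = top (proj1_sig h') e) ->
  (forall x, bot (proj1_sig h) x = bot (proj1_sig h') x) -> h = h'.
Proof. intros H1 H2; apply sig_eq_pi, BHom_eq; apply functional_extensionality; assumption. Qed.

Definition mk_slice_hom (X Y : SetArrSlice pi)
  (t : tot (projT1 X) -> tot (projT1 Y)) (b : base (projT1 X) -> base (projT1 Y))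
  (Hsq : forall e, proj (projT1 Y) (t e) = b (proj (projT1 X) e))
  (Ht : forall e, top (projT2 Y) (t e) = top (projT2 X) e)
  (Hb : forall x, bot (projT2 Y) (b x) = bot (projT2 X) x) : @Hom (SetArrSlice pi) X Y.
Proof.
  exists (mkBH _ _ t b Hsq); apply BHom_eq; apply functional_extensionality; simpl; assumption.
Defined.

Definition fibres_obj (X : SetArrSlice pi) : Family pi.
Proof.
  refine (mkFam (fun b => {b1 : base (projT1 X) | bot (projT2 X) b1 = b})
                (fun e => {e1 : tot (projT1 X) | top (projT2 X) e1 = e})
                (fun e y => exist _ (proj (projT1 X) (proj1_sig y)) _)).
  destruct y as [e1 He1]; exact (eq_trans (eq_sym (sq (projT2 X) e1)) (f_equal pi He1)).
Defined.

Definition fibres_hom (X Y : SetArrSlice pi) (h : Hom X Y) :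
  @Hom (FamCat pi) (fibres_obj X) (fibres_obj Y).
Proof.
  refine (@mkFamHom _ _ pi (fibres_obj X) (fibres_obj Y)
    (fun b x => exist _ (bot (proj1_sig h) (proj1_sig x)) (eq_trans (slice_hom_bot h _) (proj2_sig x)))
    (fun e y => exist _ (top (proj1_sig h) (proj1_sig y)) (eq_trans (slice_hom_top h _) (proj2_sig y)))
    _).
  intros e y; apply sig_eq_pi; simpl; apply sq.
Defined.

End BundlesOver.

Definition fibres {E B : Type} (pi : E -> B) : Functor (SetArrSlice pi) (FamCat pi).
Proof.
  refine (@Build_Functor (SetArrSlice pi) (FamCat pi) fibres_obj fibres_hom _ _).
  all: intros; apply FamHom_eq; intros; apply sig_eq_pi; reflexivity.
Defined.

Lemma fibres_fully_faithful {E B : Type} (pi : E -> B) : FullyFaithful (fibres pi).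
Proof.
  intros X Y; split.
  - intros h h' H; apply slice_hom_eq.
    + intros e1; exact (f_equal (@proj1_sig _ _) (hom_tot_congr H _ (exist _ e1 eq_refl))).
    + intros x; exact (f_equal (@proj1_sig _ _) (hom_base_congr H _ (exist _ x eq_refl))).
  - intros k.
    unshelve eexists (mk_slice_hom X Y
      (fun e1 => proj1_sig (hom_tot k (e:=top (projT2 X) e1) (exist _ e1 eq_refl)))
      (fun x => proj1_sig (hom_base k (b:=bot (projT2 X) x) (exist _ x eq_refl))) _ _ _).
    + intros e1; cbv beta.
      etransitivity; [exact (f_equal (@proj1_sig _ _) (hom_restr k _ (exist _ e1 eq_refl)))|].
      apply (fibre_map_indep _ _ (fun b => hom_base k (b:=b))).
    + intros e1; exact (proj2_sig (hom_tot k (exist _ e1 eq_refl))).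
    + intros x; exact (proj2_sig (hom_base k (exist _ x eq_refl))).
    + apply FamHom_eq.
      * intros b [x p]; apply sig_eq_pi; apply (fibre_map_indep _ _ (fun b => hom_base k (b:=b))).
      * intros e [x p]; apply sig_eq_pi; apply (fibre_map_indep _ _ (fun e => hom_tot k (e:=e))).
Qed.

Definition total_bundle {E B : Type} {pi : E -> B} (Z : Family pi) : SetArrSlice pi :=
  let TZ := mkB {e : E & at_tot Z e} {b : B & at_base Z b}
                (fun w => existT _ (pi (projT1 w)) (restr Z (projT2 w))) in
  existT _ TZ (mkBH TZ (mkB E B pi) (fun w => projT1 w) (fun w => projT1 w) (fun w => eq_refl)).

Lemma fibres_ess_surj {E B : Type} (pi : E -> B) : EssentiallySurjective (fibres pi).
Proof.
  intros Z; exists (total_bundle Z).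
  unshelve eexists (@mkFamHom _ _ pi (fibres_obj (total_bundle Z)) Z
    (fun b w => sigT_fibre_to (at_base Z) b w) (fun e w => sigT_fibre_to (at_tot Z) e w) _).
  { intros e [[e' y] H]; simpl in H; destruct H; reflexivity. }
  unshelve eexists (@mkFamHom _ _ pi Z (fibres_obj (total_bundle Z))
    (fun b x => sigT_fibre_from (at_base Z) b x) (fun e y => sigT_fibre_from (at_tot Z) e y) _).
  { intros e y; apply sig_eq_pi; reflexivity. }
  split; apply FamHom_eq; intros; simpl; try reflexivity; apply sigT_fibre_from_to.
Qed.

Lemma SetArrSlice_topos {E B : Type} (pi : E -> B) : Topos (SetArrSlice pi).
Proof.
  exact (topos_of_equivalence (fibres pi) (fibres_fully_faithful pi) (fibres_ess_surj pi)
           (FamCat_topos pi)).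
Qed.

Section ForgetTot.
Context {E B : Type} (pi : E -> B).

Definition forget_tot_obj (Z : Family pi) : Family (from_empty B) :=
  mkFam (at_base Z) (fun _ => Empty_set) from_empty_dep.

Definition forget_tot : Functor (FamCat pi) (FamCat (from_empty B)).
Proof.
  refine (@Build_Functor (FamCat pi) (FamCat (from_empty B)) forget_tot_obj
    (fun X Y f => @mkFamHom _ _ (from_empty B) (forget_tot_obj X) (forget_tot_obj Y)
                    (fun b x => hom_base f x) from_empty_dep from_empty_dep) _ _).
  all: intros; apply FamHom_eq; [reflexivity | intros []].
Defined.

Definition empty_tot_obj (W : Family (from_empty B)) : Family pi :=
  mkFam (at_base W) (fun _ => Empty_set) (fun e (y : Empty_set) => match y with end).

Definition empty_tot : Functor (FamCat (from_empty B)) (FamCat pi).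
Proof.
  refine (@Build_Functor (FamCat (from_empty B)) (FamCat pi) empty_tot_obj
    (fun X Y f => @mkFamHom _ _ pi (empty_tot_obj X) (empty_tot_obj Y) (fun b x => hom_base f x)
                    (fun e y => y) (fun e (y : Empty_set) => match y with end)) _ _).
  all: intros; apply FamHom_eq; reflexivity.
Defined.

Lemma forget_tot_right_adjoint :
  LeftAdjointUnit empty_tot forget_tot
    (fun W => @mkFamHom _ _ (from_empty B) W (fobj forget_tot (fobj empty_tot W))
                (fun b x => x) from_empty_dep from_empty_dep).
Proof.
  split.
  - intros X Y f; apply FamHom_eq; [reflexivity | intros []].
  - intros W Z g.
    exists (@mkFamHom _ _ pi (fobj empty_tot W) Z (fun b x => hom_base g x)
              (fun e (y : Empty_set) => match y with end) (fun e (y : Empty_set) => match y with end)).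
    split.
    + apply FamHom_eq; [reflexivity | intros []].
    + intros h' Hh'; apply FamHom_eq; [exact (hom_base_congr Hh') | intros e []].
Qed.

End ForgetTot.

Section CartesianBundles.
Context {E B : Type} {pi : E -> B}.

Lemma cartesian_lift (Y : SetArrCartSlice pi) b e :
  bot (projT2 (proj1_sig Y)) b = pi e ->
  exists y, proj (projT1 (proj1_sig Y)) y = b /\ top (projT2 (proj1_sig Y)) y = e.
Proof. exact (type_pullback_ex _ _ _ _ (proj2_sig Y) b e). Qed.

Lemma cartesian_ext (Y : SetArrCartSlice pi) (y y' : tot (projT1 (proj1_sig Y))) :
  proj (projT1 (proj1_sig Y)) y = proj (projT1 (proj1_sig Y)) y' ->
  top (projT2 (proj1_sig Y)) y = top (projT2 (proj1_sig Y)) y' -> y = y'.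
Proof. exact (type_pullback_inj _ _ _ _ (proj2_sig Y) y y'). Qed.

End CartesianBundles.

Definition base_fibres {E B : Type} (pi : E -> B) :
  Functor (SetArrCartSlice pi) (FamCat (from_empty B)) :=
  FComp (SetArrInclusion pi) (FComp (fibres pi) (forget_tot pi)).

(* Over a cartesian bundle a map is determined by its base component: the top component
   is forced by the pullback property of the target. *)
Lemma base_fibres_fully_faithful {E B : Type} (pi : E -> B) : FullyFaithful (base_fibres pi).
Proof.
  intros X Y; split.
  - intros h h' H.
    assert (Hb : forall x, bot (proj1_sig h) x = bot (proj1_sig h') x)
      by (intros x; exact (f_equal (@proj1_sig _ _) (hom_base_congr H _ (exist _ x eq_refl)))).
    apply slice_hom_eq; [|exact Hb].
    intros e1; apply cartesian_ext.
    + rewrite !(sq (proj1_sig h)), !(sq (proj1_sig h')); apply Hb.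
    + rewrite (slice_hom_top h), (slice_hom_top h'); reflexivity.
  - intros k.
    set (kb := fun x => proj1_sig (hom_base k (b:=bot (projT2 (proj1_sig X)) x) (exist _ x eq_refl))).
    assert (Hex : forall e1 : tot (projT1 (proj1_sig X)), exists y,
      proj (projT1 (proj1_sig Y)) y = kb (proj (projT1 (proj1_sig X)) e1) /\
      top (projT2 (proj1_sig Y)) y = top (projT2 (proj1_sig X)) e1).
    { intros e1; apply cartesian_lift; unfold kb; rewrite (proj2_sig (hom_base k _)).
      exact (eq_sym (sq (projT2 (proj1_sig X)) e1)). }
    unshelve eexists (mk_slice_hom (proj1_sig X) (proj1_sig Y) (fun e1 => choose (Hex e1)) kb _ _ _).
    + intros e1; exact (proj1 (choose_spec (Hex e1))).
    + intros e1; exact (proj2 (choose_spec (Hex e1))).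
    + intros x; exact (proj2_sig (hom_base k (exist _ x eq_refl))).
    + apply FamHom_eq; [|intros []].
      intros b [x p]; apply sig_eq_pi; apply (fibre_map_indep _ _ (fun b => hom_base k (b:=b))).
Qed.

Definition empty_bundle_over {E B : Type} (pi : E -> B) (A : Type) (f : A -> B) : SetArrSlice pi :=
  existT _ (mkB Empty_set A from_empty_dep)
    (mkBH (mkB Empty_set A from_empty_dep) (mkB E B pi) from_empty_dep f from_empty_dep).

(* Every family over [B] is the family of fibres of [f^* pi] for [f] the display map
   of its total space. *)
Lemma base_fibres_ess_surj {E B : Type} (pi : E -> B) : EssentiallySurjective (base_fibres pi).
Proof.
  intros Z.
  set (X := PBobj pi (empty_bundle_over pi {b : B & at_base Z b} (fun w => projT1 w))).
  exists X.
  exists (@mkFamHom _ _ (from_empty B) (fobj (base_fibres pi) X) Z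
            (fun b w => sigT_fibre_to (at_base Z) b w) from_empty_dep from_empty_dep).
  exists (@mkFamHom _ _ (from_empty B) Z (fobj (base_fibres pi) X)
            (fun b x => sigT_fibre_from (at_base Z) b x) from_empty_dep from_empty_dep).
  split; apply FamHom_eq; try (intros []); intros b w; [apply sigT_fibre_from_to | reflexivity].
Qed.

Lemma SetArrCartSlice_topos {E B : Type} (pi : E -> B) : Topos (SetArrCartSlice pi).
Proof.
  exact (topos_of_equivalence (base_fibres pi) (base_fibres_fully_faithful pi)
           (base_fibres_ess_surj pi) (FamCat_topos (from_empty B))).
Qed.

Section PullbackReflector.
Context {E B : Type} (pi : E -> B).

Definition PBhom (X Y : SetArrSlice pi) (g : Hom X Y) :
  @Hom (SetArrCartSlice pi) (PBobj pi X) (PBobj pi Y).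
Proof.
  refine (mk_slice_hom (proj1_sig (PBobj pi X)) (proj1_sig (PBobj pi Y))
    (fun p => exist _ (bot (proj1_sig g) (fst (proj1_sig p)), snd (proj1_sig p))
                      (eq_trans (slice_hom_bot g _) (proj2_sig p)))
    (bot (proj1_sig g)) _ _ _).
  - intros p; reflexivity.
  - intros p; reflexivity.
  - intros x; apply (slice_hom_bot g).
Defined.

Definition PBfunctor : FunctorOn (PBobj pi).
Proof.
  refine {| fo_map := PBhom |}.
  all: intros; apply slice_hom_eq; [intros [[b e] H]; apply sig_eq_pi | ]; reflexivity.
Defined.

Lemma PBunit_natural (X Y : SetArrSlice pi) (f : Hom X Y) :
  fmap (SetArrInclusion pi) (PBhom X Y f) ∘ PBunit pi X = PBunit pi Y ∘ f.
Proof.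
  apply slice_hom_eq; [|reflexivity].
  intros e1; apply sig_eq_pi; simpl; f_equal.
  - symmetry; apply (sq (proj1_sig f)).
  - symmetry; apply (slice_hom_top f).
Qed.

Section Transpose.
Context (X : SetArrSlice pi) (Y : SetArrCartSlice pi) (g : Hom X (proj1_sig Y)).

Lemma PB_transpose_lift (p : tot (PBbundle pi X)) : exists y,
  proj (projT1 (proj1_sig Y)) y = bot (proj1_sig g) (fst (proj1_sig p)) /\
  top (projT2 (proj1_sig Y)) y = snd (proj1_sig p).
Proof. apply cartesian_lift; exact (eq_trans (slice_hom_bot g _) (proj2_sig p)). Qed.

Definition PB_transpose : @Hom (SetArrCartSlice pi) (PBobj pi X) Y.
Proof.
  refine (mk_slice_hom (proj1_sig (PBobj pi X)) (proj1_sig Y)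
            (fun p => choose (PB_transpose_lift p)) (bot (proj1_sig g)) _ _ _).
  - intros p; exact (proj1 (choose_spec (PB_transpose_lift p))).
  - intros p; exact (proj2 (choose_spec (PB_transpose_lift p))).
  - intros x; apply (slice_hom_bot g).
Defined.

Lemma PB_transpose_spec : fmap (SetArrInclusion pi) PB_transpose ∘ PBunit pi X = g.
Proof.
  apply slice_hom_eq; [|reflexivity]; intros e1; simpl.
  match goal with |- context [choose (PB_transpose_lift ?p)] =>
    destruct (choose_spec (PB_transpose_lift p)) as [C1 C2] end.
  apply cartesian_ext.
  - etransitivity; [exact C1|]; symmetry; apply (sq (proj1_sig g)).
  - etransitivity; [exact C2|]; symmetry; apply (slice_hom_top g).
Qed.

Lemma PB_transpose_unique (h : @Hom (SetArrCartSlice pi) (PBobj pi X) Y) :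
  fmap (SetArrInclusion pi) h ∘ PBunit pi X = g -> h = PB_transpose.
Proof.
  intros Hh.
  assert (Hb : forall x, bot (proj1_sig h) x = bot (proj1_sig g) x)
    by (intros x; exact (f_equal (fun k : @Hom (SetArrSlice pi) X (proj1_sig Y) =>
                                    bot (proj1_sig k) x) Hh)).
  apply slice_hom_eq; [|exact Hb]; intros p; simpl.
  destruct (choose_spec (PB_transpose_lift p)) as [C1 C2].
  apply cartesian_ext.
  - etransitivity; [|symmetry; exact C1]; rewrite (sq (proj1_sig h)); apply Hb.
  - etransitivity; [|symmetry; exact C2]; apply (slice_hom_top h).
Qed.

End Transpose.

Lemma PB_left_adjoint : LeftAdjointUnit (toFunctor PBfunctor) (SetArrInclusion pi) (PBunit pi).
Proof.
  split; [exact PBunit_natural|].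
  intros X Y g; exists (PB_transpose X Y g); split;
    [apply PB_transpose_spec | apply PB_transpose_unique].
Qed.

End PullbackReflector.


(* Under the two fibre equivalences the reflector becomes [forget_tot], which is lex
   as a right adjoint. *)
Lemma PB_lex {E B : Type} (pi : E -> B) : PreservesFiniteLimits (toFunctor (PBfunctor pi)).
Proof.
  apply (lex_of_ff_cmp _ (base_fibres_fully_faithful pi)).
  set (L1 := FComp (fibres pi) (forget_tot pi)).
  set (L2 := FComp (toFunctor (PBfunctor pi)) (base_fibres pi)).
  refine (lex_natiso L1 L2
    (fun X => @mkFamHom _ _ (from_empty B) (fobj L1 X) (fobj L2 X) (fun b x => x)
                from_empty_dep from_empty_dep)
    (fun X => @mkFamHom _ _ (from_empty B) (fobj L2 X) (fobj L1 X) (fun b x => x)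
                from_empty_dep from_empty_dep) _ _ _
    (lex_cmp _ _ (equivalence_lex _ (fibres_fully_faithful pi) (fibres_ess_surj pi))
       (right_adjoint_lex _ _ _ (forget_tot_right_adjoint pi)))).
  all: intros; apply FamHom_eq; try (intros []); intros; try apply sig_eq_pi; reflexivity.
Qed.

(** * Dirichlet functors are determined by their values at 0 and 1 *)

Definition dmap (F : Functor (op TypeCat) TypeCat) {X Y : Type} (g : Y -> X) :
  fobj F X -> fobj F Y := fmap F (x:=X) (y:=Y) g.

Definition point {X : Type} (x : X) : unit -> X := fun _ => x.

Section Dmap.
Context (F : Functor (op TypeCat) TypeCat).

Lemma dmap_id {X : Type} (a : fobj F X) : dmap F (fun x : X => x) a = a.
Proof. exact (f_equal (fun k => k a) (fmap_id _ _ F X)). Qed.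

Lemma dmap_cmp {X Y Z : Type} (g : Y -> X) (g' : Z -> Y) a :
  dmap F g' (dmap F g a) = dmap F (fun z => g (g' z)) a.
Proof. exact (f_equal (fun k => k a) (eq_sym (fmap_cmp _ _ F X Y Z g' g))). Qed.

Lemma dmap_ext {X Y : Type} (g g' : Y -> X) a : (forall y, g y = g' y) -> dmap F g a = dmap F g' a.
Proof. intros H; replace g' with g by (apply functional_extensionality; exact H); reflexivity. Qed.

Lemma dmap_from_empty_id (a : fobj F Empty_set) : dmap F (from_empty Empty_set) a = a.
Proof. rewrite (dmap_ext _ (fun x => x)); [apply dmap_id | intros []]. Qed.

Lemma dmap_point_tt (a : fobj F unit) : dmap F (point tt) a = a.
Proof. rewrite (dmap_ext _ (fun x => x)); [apply dmap_id | intros []; reflexivity]. Qed.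

Lemma dmap_from_empty_cmp {A B : Type} (g : B -> A) a :
  dmap F (from_empty B) (dmap F g a) = dmap F (from_empty A) a.
Proof. rewrite dmap_cmp; apply dmap_ext; intros []. Qed.

Lemma dmap_point_cmp {A B : Type} (g : B -> A) (b : B) a :
  dmap F (point b) (dmap F g a) = dmap F (point (g b)) a.
Proof. rewrite dmap_cmp; apply dmap_ext; intros []; reflexivity. Qed.

End Dmap.

Lemma ncomp_dmap {F G : Functor (op TypeCat) TypeCat} (a : NatTrans F G) {X Y : Type} (g : Y -> X) x :
  dmap G g (ncomp a X x) = ncomp a Y (dmap F g x).
Proof. exact (f_equal (fun k => k x) (nnat _ _ a X Y g)). Qed.

Definition dir_nat_trans {F G : Functor (op TypeCat) TypeCat}
  (t : forall A, fobj F A -> fobj G A)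
  (Ht : forall (A B : Type) (g : B -> A) a, dmap G g (t A a) = t B (dmap F g a)) : NatTrans F G :=
  {| ncomp := t : forall A : op TypeCat, @Hom TypeCat (fobj F A) (fobj G A);
     nnat := fun A B g => functional_extensionality _ _ (fun a => Ht A B g a) |}.

(* The connected category with objects [option X]: [None] stands for the empty set and
   [Some x] for the point [x], with one arrow [Some x -> None] each.  In [Set^op] the set
   [X] is the limit of the corresponding diagram. *)
Definition points_hom {X : Type} (a b : option X) : Type :=
  match a, b with
  | None, None => unit | None, Some _ => Empty_set
  | Some _, None => unit | Some x, Some y => x = y end.

Definition points_id {X : Type} (a : option X) : points_hom a a :=
  match a with None => tt | Some x => eq_refl end.

Definition points_cmp {X : Type} (a b c : option X) : points_hom b c -> points_hom a b -> points_hom a c.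
Proof.
  destruct a as [x|], b as [y|], c as [z|]; simpl; intros g f;
    try exact tt; try destruct f; try destruct g; exact eq_refl.
Defined.

Definition points_cat (X : Type) : Category.
Proof.
  refine {| Obj := option X; Hom := points_hom; idm := points_id; cmp := points_cmp |}.
  - intros [x|] [y|] f; simpl in *; try destruct f; reflexivity.
  - intros [x|] [y|] f; simpl in *; try destruct f; reflexivity.
  - intros [w|] [x|] [y|] [z|] h g f; simpl in *; try destruct f; try destruct g; try destruct h;
      try reflexivity; apply proof_irrelevance.
Defined.

Definition points_obj {X : Type} (a : option X) : Type :=
  match a with None => Empty_set | Some _ => unit end.

Definition points_map {X : Type} (a b : option X) : points_hom a b -> points_obj b -> points_obj a.
Proof.
  destruct a as [x|], b as [y|]; simpl; intros u.
  - exact (fun t => t).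
  - exact (from_empty unit).
  - destruct u.
  - exact (fun e => e).
Defined.

Definition points_diagram (X : Type) : Functor (points_cat X) (op TypeCat).
Proof.
  refine (@Build_Functor (points_cat X) (op TypeCat) points_obj points_map _ _).
  - intros [x|]; reflexivity.
  - intros [x|] [y|] [z|] g f; simpl in *; try destruct f; try destruct g;
      apply functional_extensionality; intros t; try destruct t; reflexivity.
Defined.

Definition points_leg (X : Type) (a : option X) : points_obj a -> X :=
  match a as a0 return points_obj a0 -> X with None => from_empty X | Some x => point x end.

Lemma points_isLimit (X : Type) : IsLimit (points_diagram X) (X : op TypeCat) (points_leg X).
Proof.
  split.
  - intros [x|] [y|] u; simpl in *; try destruct u; apply functional_extensionality; intros t;
      try destruct t; reflexivity.
  - intros d m Hm; exists (fun x => m (Some x) tt); split.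
    + intros [x|]; apply functional_extensionality; intros t; destruct t; reflexivity.
    + intros h' Hh'; apply functional_extensionality; intros x.
      exact (f_equal (fun k => k tt) (Hh' (Some x))).
Qed.

Lemma points_connected (X : Type) : ConnectedCat (points_cat X).
Proof.
  split; [exact (inhabits None)|].
  assert (H : forall a : option X,
                clos_refl_sym_trans _ (fun a b => inhabited (@Hom (points_cat X) a b)) a None).
  { intros [x|]; [apply rst_step; exact (inhabits tt) | apply rst_refl]. }
  intros a b; eapply rst_trans; [apply H | apply rst_sym, H].
Qed.

Section DirichletExt.
Context (F : Functor (op TypeCat) TypeCat) (HF : Dirichlet F).

Lemma dirichlet_points_isLimit (X : Type) :
  IsLimit (FComp (points_diagram X) F) (fobj F X) (fun a => dmap F (points_leg X a)).
Proof. apply HF; [apply points_connected | apply points_isLimit]. Qed.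

Lemma dirichlet_ext (X : Type) (g g' : fobj F X) :
  dmap F (from_empty X) g = dmap F (from_empty X) g' ->
  (forall x, dmap F (point x) g = dmap F (point x) g') -> g = g'.
Proof.
  intros H0 H1; destruct (dirichlet_points_isLimit X) as [Hc Hu].
  destruct (Hu unit (fun a _ => dmap F (points_leg X a) g)) as [h [_ U]].
  { intros a b u; apply functional_extensionality; intros t; exact (f_equal (fun k => k g) (Hc a b u)). }
  assert (E1 : (fun _ : unit => g) = h) by (apply U; intros a; reflexivity).
  assert (E2 : (fun _ : unit => g') = h).
  { apply U; intros [x|]; apply functional_extensionality; intros t; symmetry; [apply H1 | exact H0]. }
  exact (f_equal (fun k => k tt) (eq_trans E1 (eq_sym E2))).
Qed.

Lemma dirichlet_glue_ex (X : Type) (g0 : fobj F Empty_set) (g1 : X -> fobj F unit) :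
  (forall x, dmap F (from_empty unit) (g1 x) = g0) ->
  exists g, dmap F (from_empty X) g = g0 /\ forall x, dmap F (point x) g = g1 x.
Proof.
  intros H; destruct (dirichlet_points_isLimit X) as [Hc Hu].
  destruct (Hu unit (fun a => match a as a0 return unit -> fobj F (points_obj a0) with
                              | None => fun _ => g0 | Some x => fun _ => g1 x end)) as [h [Hh _]].
  { intros [x|] [y|] u; apply functional_extensionality; intros t; simpl in *.
    - destruct u; exact (dmap_id F (g1 x)).
    - exact (H x).
    - destruct u.
    - exact (dmap_id F g0). }
  exists (h tt); split; [exact (f_equal (fun k => k tt) (Hh None)) |].
  intros x; exact (f_equal (fun k => k tt) (Hh (Some x))).
Qed.

Definition dglue {X : Type} (g0 : fobj F Empty_set) (g1 : X -> fobj F unit)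
  (H : forall x, dmap F (from_empty unit) (g1 x) = g0) : fobj F X :=
  choose (dirichlet_glue_ex X g0 g1 H).

Lemma dmap_dglue_empty {X : Type} g0 g1 H : dmap F (from_empty X) (@dglue X g0 g1 H) = g0.
Proof. exact (proj1 (choose_spec (dirichlet_glue_ex X g0 g1 H))). Qed.

Lemma dmap_dglue_point {X : Type} g0 g1 H x : dmap F (point x) (@dglue X g0 g1 H) = g1 x.
Proof. exact (proj2 (choose_spec (dirichlet_glue_ex X g0 g1 H)) x). Qed.

Lemma nat_trans_ext_01 {G : Functor (op TypeCat) TypeCat} (a b : NatTrans G F) :
  (forall x, ncomp a Empty_set x = ncomp b Empty_set x) ->
  (forall x, ncomp a unit x = ncomp b unit x) -> forall A x, ncomp a A x = ncomp b A x.
Proof.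
  intros H0 H1 A x; apply dirichlet_ext.
  - rewrite !(ncomp_dmap _ (from_empty A)); apply H0.
  - intros z; rewrite !(ncomp_dmap _ (point z)); apply H1.
Qed.

End DirichletExt.

Lemma connected_constant {J : Category} (HJ : ConnectedCat J) {T : Type} (f : J -> T) :
  (forall k k' (u : Hom k k'), f k = f k') -> forall k k', f k = f k'.
Proof.
  intros Hf k k'; induction (proj2 HJ k k') as [a b [u] | a | a b _ IH | a b c _ IH1 _ IH2].
  - exact (Hf a b u).
  - reflexivity.
  - symmetry; exact IH.
  - rewrite IH1; exact IH2.
Qed.

Lemma colimit_legs_jointly_surjective {J : Category} (G : Functor J (op TypeCat)) (c : op TypeCat)
  (l : forall k, @Hom (op TypeCat) c (fobj G k)) :
  IsLimit G c l -> forall x : c, exists k z, l k z = x.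
Proof.
  intros [Hc Hu] x.
  set (c' := {x : c | exists k z, l k z = x}).
  destruct (Hu (c' : op TypeCat) (fun k z => exist _ (l k z) (ex_intro _ k (ex_intro _ z eq_refl))))
    as [h [Hh _]].
  { intros k k' u; apply functional_extensionality; intros z; apply sig_eq_pi; simpl.
    exact (f_equal (fun g => g z) (Hc k k' u)). }
  destruct (Hu c l Hc) as [h0 [_ U0]].
  assert (E1 : (fun y : c => proj1_sig (h y)) = h0).
  { apply U0; intros k; apply functional_extensionality; intros z.
    exact (f_equal (fun g => proj1_sig (g z)) (Hh k)). }
  assert (E2 : (fun y : c => y) = h0) by (apply U0; intros k; reflexivity).
  rewrite <- (f_equal (fun g => g x) (eq_trans E1 (eq_sym E2))); exact (proj2_sig (h x)).
Qed.

(* The Dirichlet functor [A |-> sum_(b : BZ) (p^-1 b)^A] of a bundle [p]. *)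
Section DirichletOfBundle.
Context {EZ BZ : Type} (p : EZ -> BZ).

Definition dirichlet_of_obj (A : Type) : Type := {w : BZ * (A -> EZ) | forall a, p (snd w a) = fst w}.

Definition dirichlet_of_map {A B : Type} (g : B -> A) (w : dirichlet_of_obj A) : dirichlet_of_obj B :=
  exist (fun w' : BZ * (B -> EZ) => forall b, p (snd w' b) = fst w')
    (fst (proj1_sig w), fun b => snd (proj1_sig w) (g b)) (fun b => proj2_sig w (g b)).

Definition dirichlet_of_at0 (b : BZ) : dirichlet_of_obj Empty_set :=
  exist (fun w : BZ * (Empty_set -> EZ) => forall a, p (snd w a) = fst w)
    (b, from_empty EZ) from_empty_dep.

Definition dirichlet_of_at1 (e : EZ) : dirichlet_of_obj unit :=
  exist (fun w : BZ * (unit -> EZ) => forall a, p (snd w a) = fst w) (p e, point e) (fun _ => eq_refl).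

Definition dirichlet_of : Functor (op TypeCat) TypeCat.
Proof.
  refine (@Build_Functor (op TypeCat) TypeCat dirichlet_of_obj (fun A B g => dirichlet_of_map g) _ _).
  all: intros; apply functional_extensionality; intros [[b s] H]; apply sig_eq_pi; reflexivity.
Defined.

Section ConnectedLimit.
Context {J : Category} (HJ : ConnectedCat J) {G : Functor J (op TypeCat)} {c : op TypeCat}
  {l : forall k, @Hom (op TypeCat) c (fobj G k)} (Hl : IsLimit G c l)
  {d : Type} (m : forall k, d -> dirichlet_of_obj (fobj G k)) (Hm : IsCone (FComp G dirichlet_of) d m).

(* Since [J] is connected, the base point of a cone is the same at every vertex, and the
   fibre components glue along the colimit [c] of [G] in [Set]. *)
Lemma dirichlet_of_cone_base y k k' : fst (proj1_sig (m k y)) = fst (proj1_sig (m k' y)).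
Proof.
  apply (connected_constant HJ (fun k => fst (proj1_sig (m k y)))).
  intros a b u; rewrite <- (Hm a b u); reflexivity.
Qed.

Lemma dirichlet_of_cone_fibre y :
  exists s : c -> EZ, (forall k, (fun z => s (l k z)) = snd (proj1_sig (m k y))) /\
    forall s' : c -> EZ, (forall k, (fun z => s' (l k z)) = snd (proj1_sig (m k y))) -> s' = s.
Proof.
  destruct (proj2 Hl (EZ : op TypeCat) (fun k => snd (proj1_sig (m k y)))) as [s [Hs U]].
  - intros k k' u; rewrite <- (Hm k k' u); reflexivity.
  - exists s; split; [exact Hs | exact U].
Qed.

End ConnectedLimit.

Lemma dirichlet_of_dirichlet : Dirichlet dirichlet_of.
Proof.
  intros J HJ G c l Hl; pose proof (colimit_legs_jointly_surjective G c l Hl) as Hsurj.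
  split.
  - intros k k' u; apply functional_extensionality; intros w; apply sig_eq_pi; simpl.
    f_equal; apply functional_extensionality; intros z.
    exact (f_equal (fun g => snd (proj1_sig w) (g z)) (proj1 Hl k k' u)).
  - intros d m Hm; cbn [FComp fobj fmap] in *; destruct (proj1 HJ) as [k0].
    set (s := fun y => choose (dirichlet_of_cone_fibre Hl m Hm y)).
    assert (Hs : forall y k, (fun z => s y (l k z)) = snd (proj1_sig (m k y)))
      by (intros y; exact (proj1 (choose_spec (dirichlet_of_cone_fibre Hl m Hm y)))).
    assert (Hp : forall y x, p (s y x) = fst (proj1_sig (m k0 y))).
    { intros y x; destruct (Hsurj x) as [k [z <-]].
      rewrite (f_equal (fun g => g z) (Hs y k)), (proj2_sig (m k y) z).
      apply (dirichlet_of_cone_base HJ m Hm). }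
    exists (fun y => exist _ (fst (proj1_sig (m k0 y)), s y) (Hp y)); split.
    + intros k; apply functional_extensionality; intros y; apply sig_eq_pi; simpl.
      rewrite (dirichlet_of_cone_base HJ m Hm y k0 k), (Hs y k).
      destruct (m k y) as [[b t] H]; reflexivity.
    + intros h' Hh'; apply functional_extensionality; intros y; apply sig_eq_pi; simpl.
      assert (Ek : forall k, (fst (proj1_sig (h' y)), fun z => snd (proj1_sig (h' y)) (l k z))
                             = proj1_sig (m k y))
        by (intros k; rewrite <- (Hh' k); reflexivity).
      destruct (h' y) as [[b t] H]; simpl in *; f_equal.
      * rewrite <- (Ek k0); reflexivity.
      * apply (proj2 (choose_spec (dirichlet_of_cone_fibre Hl m Hm y))).
        intros k; rewrite <- (Ek k); reflexivity.
Qed.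

End DirichletOfBundle.

Definition dirichlet_of_hom {EZ BZ EZ' BZ' : Type} {p : EZ -> BZ} (p' : EZ' -> BZ')
  (t : EZ -> EZ') (b : BZ -> BZ') (Hsq : forall e, p' (t e) = b (p e)) (A : Type)
  (w : dirichlet_of_obj p A) : dirichlet_of_obj p' A :=
  exist (fun w' : BZ' * (A -> EZ') => forall a, p' (snd w' a) = fst w')
    (b (fst (proj1_sig w)), fun a => t (snd (proj1_sig w) a))
    (fun a => eq_trans (Hsq _) (f_equal b (proj2_sig w a))).

(** * Dirichlet functors over [D] as families over [D(1) -> D(0)] *)

Section DirichletOver.
Context (D : DirObj).

Definition DFun : Functor (op TypeCat) TypeCat := proj1_sig D.
Definition D0 : Type := fobj DFun Empty_set.
Definition D1 : Type := fobj DFun unit.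
Definition piD : D1 -> D0 := dmap DFun (from_empty unit).

Definition dfun (X : DirSlice D) : Functor (op TypeCat) TypeCat := proj1_sig (projT1 X).
Definition dfun_dirichlet (X : DirSlice D) : Dirichlet (dfun X) := proj2_sig (projT1 X).
Definition dstr (X : DirSlice D) : NatTrans (dfun X) DFun := projT2 X.
Definition dnt {X Y : DirSlice D} (h : Hom X Y) : NatTrans (dfun X) (dfun Y) := proj1_sig h.

Lemma dnt_over {X Y : DirSlice D} (h : Hom X Y) (A : Type) x :
  ncomp (dstr Y) A (ncomp (dnt h) A x) = ncomp (dstr X) A x.
Proof. exact (f_equal (fun k : NatTrans (dfun X) DFun => ncomp k A x) (proj2_sig h)). Qed.

Lemma dir_slice_hom_eq {X Y : DirSlice D} (h h' : Hom X Y) :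
  (forall A x, ncomp (dnt h) A x = ncomp (dnt h') A x) -> h = h'.
Proof.
  intros H; apply sig_eq_pi, NatTrans_eq; intros A; apply functional_extensionality, H.
Qed.

Definition dir_fibres_obj (X : DirSlice D) : Family piD.
Proof.
  refine (mkFam (fun d0 => {x : fobj (dfun X) Empty_set | ncomp (dstr X) Empty_set x = d0})
                (fun d1 => {y : fobj (dfun X) unit | ncomp (dstr X) unit y = d1})
                (fun d1 y => exist _ (dmap (dfun X) (from_empty unit) (proj1_sig y)) _)).
  rewrite <- (ncomp_dmap (dstr X)); unfold piD; f_equal; exact (proj2_sig y).
Defined.

Definition dir_fibres_hom (X Y : DirSlice D) (h : Hom X Y) :
  FamHom (dir_fibres_obj X) (dir_fibres_obj Y).
Proof.
  refine (@mkFamHom _ _ piD (dir_fibres_obj X) (dir_fibres_obj Y)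
    (fun d0 x => exist _ (ncomp (dnt h) Empty_set (proj1_sig x)) (eq_trans (dnt_over h _ _) (proj2_sig x)))
    (fun d1 y => exist _ (ncomp (dnt h) unit (proj1_sig y)) (eq_trans (dnt_over h _ _) (proj2_sig y)))
    _).
  intros e y; apply sig_eq_pi; apply ncomp_dmap.
Defined.

Definition dir_fibres : Functor (DirSlice D) (FamCat piD).
Proof.
  refine (@Build_Functor (DirSlice D) (FamCat piD) dir_fibres_obj dir_fibres_hom _ _).
  all: intros; apply FamHom_eq; intros; apply sig_eq_pi; reflexivity.
Defined.

Section DirLift.
Context {X Y : DirSlice D} (k : FamHom (dir_fibres_obj X) (dir_fibres_obj Y)).

Definition dir_lift0 (x : fobj (dfun X) Empty_set) : fobj (dfun Y) Empty_set :=
  proj1_sig (hom_base k (b:=ncomp (dstr X) Empty_set x) (exist _ x eq_refl)).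

Definition dir_lift1 (y : fobj (dfun X) unit) : fobj (dfun Y) unit :=
  proj1_sig (hom_tot k (e:=ncomp (dstr X) unit y) (exist _ y eq_refl)).

Lemma dir_lift_compat A (a : fobj (dfun X) A) z :
  dmap (dfun Y) (from_empty unit) (dir_lift1 (dmap (dfun X) (point z) a)) =
  dir_lift0 (dmap (dfun X) (from_empty A) a).
Proof.
  etransitivity; [exact (f_equal (@proj1_sig _ _) (hom_restr k _ (exist _ _ eq_refl)))|].
  rewrite <- (dmap_from_empty_cmp _ (point z)).
  apply (fibre_map_indep _ _ (fun b => hom_base k (b:=b))).
Qed.

Definition dir_lift_cmp A (a : fobj (dfun X) A) : fobj (dfun Y) A :=
  dglue (dfun Y) (dfun_dirichlet Y) (dir_lift0 (dmap (dfun X) (from_empty A) a))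
    (fun z => dir_lift1 (dmap (dfun X) (point z) a)) (dir_lift_compat A a).

Lemma dir_lift_cmp_nat (A B : Type) (g : B -> A) a :
  dmap (dfun Y) g (dir_lift_cmp A a) = dir_lift_cmp B (dmap (dfun X) g a).
Proof.
  apply (dirichlet_ext _ (dfun_dirichlet Y)); [|intros z]; unfold dir_lift_cmp.
  - rewrite dmap_from_empty_cmp, !dmap_dglue_empty, dmap_from_empty_cmp; reflexivity.
  - rewrite dmap_point_cmp, !dmap_dglue_point, dmap_point_cmp; reflexivity.
Qed.

Lemma dir_lift_over :
  NTcmp (dstr Y) (dir_nat_trans dir_lift_cmp dir_lift_cmp_nat) = dstr X.
Proof.
  apply NatTrans_eq; intros A; apply functional_extensionality; intros a; simpl.
  apply (dirichlet_ext _ (proj2_sig D)); [|intros z];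
    rewrite !ncomp_dmap; unfold dir_lift_cmp; simpl.
  - rewrite dmap_dglue_empty; exact (proj2_sig (hom_base k (exist _ _ eq_refl))).
  - rewrite dmap_dglue_point; exact (proj2_sig (hom_tot k (exist _ _ eq_refl))).
Qed.

Definition dir_lift : Hom X Y := exist _ (dir_nat_trans dir_lift_cmp dir_lift_cmp_nat) dir_lift_over.

Lemma fmap_dir_lift : fmap dir_fibres dir_lift = k.
Proof.
  apply FamHom_eq; intros ? [x p]; apply sig_eq_pi; simpl; unfold dir_lift_cmp.
  - etransitivity; [symmetry; apply dmap_from_empty_id|].
    rewrite dmap_dglue_empty, dmap_from_empty_id.
    apply (fibre_map_indep _ _ (fun b => hom_base k (b:=b))).
  - etransitivity; [symmetry; apply dmap_point_tt|].
    rewrite dmap_dglue_point, dmap_point_tt.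
    apply (fibre_map_indep _ _ (fun b => hom_tot k (e:=b))).
Qed.

End DirLift.

Lemma dir_fibres_fully_faithful : FullyFaithful dir_fibres.
Proof.
  intros X Y; split.
  - intros h h' H; apply dir_slice_hom_eq, (nat_trans_ext_01 _ (dfun_dirichlet Y)).
    + intros x; exact (f_equal (@proj1_sig _ _) (hom_base_congr H _ (exist _ x eq_refl))).
    + intros x; exact (f_equal (@proj1_sig _ _) (hom_tot_congr H _ (exist _ x eq_refl))).
  - intros k; exists (dir_lift k); apply fmap_dir_lift.
Qed.


Section DirOfBundle.
Context (X : SetArrSlice piD).

Definition dstr_of_bundle_cmp A (w : dirichlet_of_obj (proj (projT1 X)) A) : fobj DFun A :=
  dglue DFun (proj2_sig D) (bot (projT2 X) (fst (proj1_sig w)))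
    (fun a => top (projT2 X) (snd (proj1_sig w) a))
    (fun a => eq_trans (sq (projT2 X) _) (f_equal (bot (projT2 X)) (proj2_sig w a))).

Lemma dstr_of_bundle_cmp_nat (A B : Type) (g : B -> A) w :
  dmap DFun g (dstr_of_bundle_cmp A w) = dstr_of_bundle_cmp B (dirichlet_of_map _ g w).
Proof.
  apply (dirichlet_ext _ (proj2_sig D)); [|intros z]; unfold dstr_of_bundle_cmp.
  - rewrite dmap_from_empty_cmp, !dmap_dglue_empty; reflexivity.
  - rewrite dmap_point_cmp, !dmap_dglue_point; reflexivity.
Qed.

Definition dir_of_bundle : DirSlice D :=
  existT (fun F : Dir => @Hom Dir F D)
    (exist _ (dirichlet_of (proj (projT1 X))) (dirichlet_of_dirichlet _))
    (dir_nat_trans (F:=dirichlet_of (proj (projT1 X))) (G:=DFun) dstr_of_bundle_cmp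
       dstr_of_bundle_cmp_nat).

Lemma dstr_of_bundle0 w : ncomp (dstr dir_of_bundle) Empty_set w = bot (projT2 X) (fst (proj1_sig w)).
Proof.
  simpl; unfold dstr_of_bundle_cmp.
  etransitivity; [symmetry; apply dmap_from_empty_id | apply dmap_dglue_empty].
Qed.

Lemma dstr_of_bundle1 w : ncomp (dstr dir_of_bundle) unit w = top (projT2 X) (snd (proj1_sig w) tt).
Proof.
  simpl; unfold dstr_of_bundle_cmp.
  etransitivity; [symmetry; apply dmap_point_tt | apply dmap_dglue_point].
Qed.

Lemma dmap_dstr_of_bundle_empty A w :
  dmap DFun (from_empty A) (ncomp (dstr dir_of_bundle) A w) =
  bot (projT2 X) (fst (proj1_sig w)).
Proof. apply dmap_dglue_empty. Qed.

Lemma dmap_dstr_of_bundle_point A w (a : A) :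
  dmap DFun (point a) (ncomp (dstr dir_of_bundle) A w) =
  top (projT2 X) (snd (proj1_sig w) a).
Proof. simpl; unfold dstr_of_bundle_cmp; rewrite dmap_dglue_point; reflexivity. Qed.

Definition dir_fibres_of_bundle_to :
  @Hom (FamCat piD) (dir_fibres_obj dir_of_bundle) (fibres_obj X).
Proof.
  refine (@mkFamHom _ _ piD (dir_fibres_obj dir_of_bundle) (fibres_obj X)
    (fun b x => exist _ (fst (proj1_sig (proj1_sig x)))
                  (eq_trans (eq_sym (dstr_of_bundle0 _)) (proj2_sig x)))
    (fun e y => exist _ (snd (proj1_sig (proj1_sig y)) tt)
                  (eq_trans (eq_sym (dstr_of_bundle1 _)) (proj2_sig y))) _).
  intros e y; apply sig_eq_pi; exact (proj2_sig (proj1_sig y) tt).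
Defined.

Definition dir_fibres_of_bundle_from :
  @Hom (FamCat piD) (fibres_obj X) (dir_fibres_obj dir_of_bundle).
Proof.
  unshelve refine (@mkFamHom _ _ piD (fibres_obj X) (dir_fibres_obj dir_of_bundle)
    (fun b x => exist _ (dirichlet_of_at0 _ (proj1_sig x)) _)
    (fun e y => exist _ (dirichlet_of_at1 _ (proj1_sig y)) _) _).
  - rewrite dstr_of_bundle0; exact (proj2_sig x).
  - rewrite dstr_of_bundle1; exact (proj2_sig y).
  - intros e y; apply sig_eq_pi, sig_eq_pi; simpl; f_equal.
    apply functional_extensionality; intros [].
Defined.

Lemma dir_fibres_of_bundle_from_to : dir_fibres_of_bundle_from ∘ dir_fibres_of_bundle_to = idm _.
Proof.
  apply FamHom_eq; intros ? [[[b s] Hs] Hx]; apply sig_eq_pi, sig_eq_pi; simpl; f_equal.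
  - apply functional_extensionality; intros [].
  - exact (Hs tt).
  - apply functional_extensionality; intros []; reflexivity.
Qed.

Lemma dir_fibres_of_bundle_to_from : dir_fibres_of_bundle_to ∘ dir_fibres_of_bundle_from = idm _.
Proof. apply FamHom_eq; intros; apply sig_eq_pi; reflexivity. Qed.

End DirOfBundle.

Lemma dir_fibres_ess_surj : EssentiallySurjective dir_fibres.
Proof.
  exact (ess_surj_of_iso dir_fibres (fibres piD) dir_of_bundle dir_fibres_of_bundle_to
           dir_fibres_of_bundle_from dir_fibres_of_bundle_from_to dir_fibres_of_bundle_to_from
           (fibres_ess_surj piD)).
Qed.

Lemma DirSlice_topos : Topos (DirSlice D).
Proof.
  exact (topos_of_equivalence dir_fibres dir_fibres_fully_faithful dir_fibres_ess_surj
           (FamCat_topos piD)).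
Qed.


Section DirCartesian.
Context (Y : DirCartSlice D).

Lemma dcart_lift A (d : fobj DFun A) (y0 : fobj (dfun (proj1_sig Y)) Empty_set) :
  dmap DFun (from_empty A) d = ncomp (dstr (proj1_sig Y)) Empty_set y0 ->
  exists y, ncomp (dstr (proj1_sig Y)) A y = d /\ dmap (dfun (proj1_sig Y)) (from_empty A) y = y0.
Proof. exact (type_pullback_ex _ _ _ _ (proj2_sig Y A Empty_set (from_empty A)) d y0). Qed.

Lemma dcart_ext A (y y' : fobj (dfun (proj1_sig Y)) A) :
  ncomp (dstr (proj1_sig Y)) A y = ncomp (dstr (proj1_sig Y)) A y' ->
  dmap (dfun (proj1_sig Y)) (from_empty A) y = dmap (dfun (proj1_sig Y)) (from_empty A) y' -> y = y'.
Proof. exact (type_pullback_inj _ _ _ _ (proj2_sig Y A Empty_set (from_empty A)) y y'). Qed.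

End DirCartesian.

Section DirOfCartesianBundle.
Context (Y : SetArrCartSlice piD).

Lemma dir_of_bundle_pullback_lift (A A' : Type) (g : A' -> A) (d : fobj DFun A)
  (w' : dirichlet_of_obj (proj (projT1 (proj1_sig Y))) A') :
  dmap DFun g d = ncomp (dstr (dir_of_bundle (proj1_sig Y))) A' w' ->
  exists w, ncomp (dstr (dir_of_bundle (proj1_sig Y))) A w = d /\ dirichlet_of_map _ g w = w'.
Proof.
  intros Hd; set (b' := fst (proj1_sig w')).
  assert (K : dmap DFun (from_empty A) d = bot (projT2 (proj1_sig Y)) b').
  { rewrite <- (dmap_from_empty_cmp _ g), Hd; apply dmap_dstr_of_bundle_empty. }
  assert (Hlift : forall a, exists e1, proj (projT1 (proj1_sig Y)) e1 = b' /\
                              top (projT2 (proj1_sig Y)) e1 = dmap DFun (point a) d).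
  { intros a; apply cartesian_lift; unfold piD; rewrite dmap_from_empty_cmp; symmetry; exact K. }
  set (s := fun a => choose (Hlift a)).
  exists (exist (fun w : _ * (A -> _) => forall a, proj (projT1 (proj1_sig Y)) (snd w a) = fst w)
            (b', s) (fun a => proj1 (choose_spec (Hlift a)))); split.
  - apply (dirichlet_ext _ (proj2_sig D)); [|intros a].
    + rewrite dmap_dstr_of_bundle_empty; symmetry; exact K.
    + rewrite dmap_dstr_of_bundle_point; exact (proj2 (choose_spec (Hlift a))).
  - apply sig_eq_pi; simpl; destruct w' as [[b'' s'] Hs']; simpl in *; subst b'; f_equal.
    apply functional_extensionality; intros a'; apply cartesian_ext;
      destruct (choose_spec (Hlift (g a'))) as [C1 C2].
    + etransitivity; [exact C1 | symmetry; apply Hs'].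
    + etransitivity; [exact C2|]; rewrite <- dmap_point_cmp, Hd.
      apply dmap_dstr_of_bundle_point.
Qed.

Lemma dir_of_bundle_pullback_inj (A A' : Type) (g : A' -> A)
  (w1 w2 : dirichlet_of_obj (proj (projT1 (proj1_sig Y))) A) :
  ncomp (dstr (dir_of_bundle (proj1_sig Y))) A w1 = ncomp (dstr (dir_of_bundle (proj1_sig Y))) A w2 ->
  dirichlet_of_map _ g w1 = dirichlet_of_map _ g w2 -> w1 = w2.
Proof.
  intros H1 H2.
  assert (Eb : fst (proj1_sig w1) = fst (proj1_sig w2))
    by exact (f_equal (fun w => fst (proj1_sig w)) H2).
  assert (Es : forall a, top (projT2 (proj1_sig Y)) (snd (proj1_sig w1) a) =
                         top (projT2 (proj1_sig Y)) (snd (proj1_sig w2) a))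
    by (intros a; rewrite <- !dmap_dstr_of_bundle_point, H1; reflexivity).
  apply sig_eq_pi; destruct w1 as [[b1 s1] Hs1], w2 as [[b2 s2] Hs2]; simpl in *; subst b2.
  f_equal; apply functional_extensionality; intros a; apply cartesian_ext; [|apply Es].
  rewrite Hs1, Hs2; reflexivity.
Qed.

Lemma dir_of_bundle_cartesian : CartesianNT (dstr (dir_of_bundle (proj1_sig Y))).
Proof.
  intros A A' g; apply type_pullback_intro.
  - intros w; apply dstr_of_bundle_cmp_nat.
  - intros d w' Hd; exact (dir_of_bundle_pullback_lift A A' g d w' Hd).
  - intros w1 w2; exact (dir_of_bundle_pullback_inj A A' g w1 w2).
Qed.

End DirOfCartesianBundle.

Definition dir_cart_of_bundle (Y : SetArrCartSlice piD) : DirCartSlice D :=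
  exist _ (dir_of_bundle (proj1_sig Y)) (dir_of_bundle_cartesian Y).

Definition dir_base_fibres : Functor (DirCartSlice D) (FamCat (from_empty D0)) :=
  FComp (DirInclusion D) (FComp dir_fibres (forget_tot piD)).

Section DirCartLift.
Context {X Y : DirCartSlice D} (k : FamHom (fobj dir_base_fibres X) (fobj dir_base_fibres Y)).

Definition dir_cart_lift0 (x : fobj (dfun (proj1_sig X)) Empty_set) : fobj (dfun (proj1_sig Y)) Empty_set :=
  proj1_sig (hom_base k (b:=ncomp (dstr (proj1_sig X)) Empty_set x) (exist _ x eq_refl)).

Lemma dir_cart_lift_ex A (a : fobj (dfun (proj1_sig X)) A) :
  exists y, ncomp (dstr (proj1_sig Y)) A y = ncomp (dstr (proj1_sig X)) A a /\
    dmap (dfun (proj1_sig Y)) (from_empty A) y = dir_cart_lift0 (dmap (dfun (proj1_sig X)) (from_empty A) a).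
Proof.
  apply dcart_lift; unfold dir_cart_lift0.
  rewrite (proj2_sig (hom_base k _)); apply ncomp_dmap.
Qed.

Definition dir_cart_lift_cmp A a := choose (dir_cart_lift_ex A a).

Lemma dir_cart_lift_cmp_nat (A B : Type) (g : B -> A) a :
  dmap (dfun (proj1_sig Y)) g (dir_cart_lift_cmp A a) = dir_cart_lift_cmp B (dmap (dfun (proj1_sig X)) g a).
Proof.
  unfold dir_cart_lift_cmp.
  destruct (choose_spec (dir_cart_lift_ex A a)) as [E1 E2].
  destruct (choose_spec (dir_cart_lift_ex B (dmap _ g a))) as [F1 F2].
  apply dcart_ext.
  - rewrite <- (ncomp_dmap (dstr (proj1_sig Y)) g), E1, F1; exact (ncomp_dmap _ g a).
  - rewrite (dmap_from_empty_cmp _ g).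
    etransitivity; [exact E2 | etransitivity; [|symmetry; exact F2]].
    f_equal; symmetry; apply dmap_from_empty_cmp.
Qed.

Definition dir_cart_lift : @Hom (DirCartSlice D) X Y.
Proof.
  exists (dir_nat_trans dir_cart_lift_cmp dir_cart_lift_cmp_nat).
  apply NatTrans_eq; intros A; apply functional_extensionality; intros a.
  exact (proj1 (choose_spec (dir_cart_lift_ex A a))).
Defined.

Lemma fmap_dir_cart_lift : fmap dir_base_fibres dir_cart_lift = k.
Proof.
  apply FamHom_eq; [|intros []].
  intros d0 [x p]; apply sig_eq_pi; simpl; unfold dir_cart_lift_cmp.
  destruct (choose_spec (dir_cart_lift_ex Empty_set x)) as [_ E2].
  etransitivity; [symmetry; apply dmap_from_empty_id|].
  etransitivity; [exact E2|]; rewrite (dmap_from_empty_id (dfun (proj1_sig X)) x).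
  apply (fibre_map_indep _ _ (fun b => hom_base k (b:=b))).
Qed.

End DirCartLift.

(* Over a cartesian Dirichlet functor a map is determined by its component at 0. *)
Lemma dir_base_fibres_fully_faithful : FullyFaithful dir_base_fibres.
Proof.
  intros X Y; split.
  - intros h h' H; apply dir_slice_hom_eq; intros A a; apply dcart_ext.
    + rewrite !dnt_over; reflexivity.
    + rewrite !(ncomp_dmap (dnt _)).
      exact (f_equal (@proj1_sig _ _) (hom_base_congr H _ (exist _ _ eq_refl))).
  - intros k; exists (dir_cart_lift k); apply fmap_dir_cart_lift.
Qed.

Lemma dir_base_fibres_ess_surj : EssentiallySurjective dir_base_fibres.
Proof.
  apply (ess_surj_of_iso dir_base_fibres (base_fibres piD) dir_cart_of_bundle
           (fun Y => fmap (forget_tot piD) (dir_fibres_of_bundle_to (proj1_sig Y)))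
           (fun Y => fmap (forget_tot piD) (dir_fibres_of_bundle_from (proj1_sig Y)))).
  - intros Y; apply FamHom_eq; [|intros []].
    exact (hom_base_congr (dir_fibres_of_bundle_from_to (proj1_sig Y))).
  - intros Y; apply FamHom_eq; [|intros []].
    exact (hom_base_congr (dir_fibres_of_bundle_to_from (proj1_sig Y))).
  - apply base_fibres_ess_surj.
Qed.

Lemma DirCartSlice_topos : Topos (DirCartSlice D).
Proof.
  exact (topos_of_equivalence dir_base_fibres dir_base_fibres_fully_faithful
           dir_base_fibres_ess_surj (FamCat_topos (from_empty D0))).
Qed.

Definition dir_of_bundle_hom {X Y : SetArrSlice piD} (h : Hom X Y) :
  Hom (dir_of_bundle X) (dir_of_bundle Y).
Proof.
  unshelve eexists (dir_nat_trans (F:=dirichlet_of (proj (projT1 X)))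
    (G:=dirichlet_of (proj (projT1 Y)))
    (dirichlet_of_hom _ (top (proj1_sig h)) (bot (proj1_sig h)) (sq (proj1_sig h))) _).
  - intros A B g w; apply sig_eq_pi; reflexivity.
  - apply NatTrans_eq; intros A; apply functional_extensionality; intros w; simpl.
    apply (dirichlet_ext _ (proj2_sig D)); [|intros a].
    + unfold dstr_of_bundle_cmp; rewrite !dmap_dglue_empty; apply slice_hom_bot.
    + unfold dstr_of_bundle_cmp; rewrite !dmap_dglue_point; apply slice_hom_top.
Defined.

Definition dir_base_bundle (X : DirSlice D) : SetArrSlice piD :=
  empty_bundle_over piD (fobj (dfun X) Empty_set) (ncomp (dstr X) Empty_set).

Definition dir_base_bundle_hom {X Y : DirSlice D} (h : Hom X Y) :
  Hom (dir_base_bundle X) (dir_base_bundle Y) :=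
  mk_slice_hom (dir_base_bundle X) (dir_base_bundle Y) from_empty_dep (ncomp (dnt h) Empty_set)
    from_empty_dep from_empty_dep (dnt_over h Empty_set).

(* The reflection of [X] is the Dirichlet functor of the pullback of [piD] along
   [X(0) -> D(0)]. *)
Definition dir_reflector_obj (X : DirSlice D) : DirCartSlice D :=
  dir_cart_of_bundle (PBobj piD (dir_base_bundle X)).

Definition dir_reflector : Functor (DirSlice D) (DirCartSlice D).
Proof.
  refine (@Build_Functor (DirSlice D) (DirCartSlice D) dir_reflector_obj
            (fun X Y h => dir_of_bundle_hom (PBhom piD _ _ (dir_base_bundle_hom h))) _ _).
  all: intros; apply dir_slice_hom_eq; intros A [[b s] Hs]; apply sig_eq_pi; simpl; f_equal;
    apply functional_extensionality; intros a; apply sig_eq_pi; simpl;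
    destruct (s a) as [[c d] Hcd]; reflexivity.
Defined.

Section DirUnit.
Context (X : DirSlice D).

Definition dir_unit_cmp A (a : fobj (dfun X) A) : fobj (dfun (proj1_sig (dir_reflector_obj X))) A.
Proof.
  refine (exist (fun w : _ * (A -> tot (PBbundle piD (dir_base_bundle X))) =>
                   forall z, fst (proj1_sig (snd w z)) = fst w)
            (dmap (dfun X) (from_empty A) a,
             fun z => exist _ (dmap (dfun X) (from_empty A) a, dmap DFun (point z) (ncomp (dstr X) A a)) _)
            (fun z => eq_refl)).
  simpl; unfold piD; rewrite dmap_from_empty_cmp; symmetry; apply ncomp_dmap.
Defined.

Lemma dir_unit_cmp_nat (A B : Type) (g : B -> A) a :
  dmap (dfun (proj1_sig (dir_reflector_obj X))) g (dir_unit_cmp A a) = dir_unit_cmp B (dmap (dfun X) g a).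
Proof.
  apply sig_eq_pi; simpl; f_equal.
  - symmetry; apply dmap_from_empty_cmp.
  - apply functional_extensionality; intros z; apply sig_eq_pi; simpl; f_equal.
    + symmetry; apply dmap_from_empty_cmp.
    + rewrite <- ncomp_dmap, dmap_point_cmp; reflexivity.
Qed.

Lemma dir_unit_over :
  NTcmp (dstr (proj1_sig (dir_reflector_obj X))) (dir_nat_trans dir_unit_cmp dir_unit_cmp_nat) = dstr X.
Proof.
  apply NatTrans_eq; intros A; apply functional_extensionality; intros a.
  change (ncomp (dstr (proj1_sig (dir_reflector_obj X))) A (dir_unit_cmp A a) = ncomp (dstr X) A a).
  apply (dirichlet_ext _ (proj2_sig D)); [|intros z].
  - etransitivity; [apply (dmap_dstr_of_bundle_empty (proj1_sig (PBobj piD (dir_base_bundle X))))|].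
    symmetry; apply ncomp_dmap.
  - apply (dmap_dstr_of_bundle_point (proj1_sig (PBobj piD (dir_base_bundle X)))).
Qed.

Definition dir_unit : Hom X (fobj (DirInclusion D) (dir_reflector_obj X)) :=
  exist _ (dir_nat_trans dir_unit_cmp dir_unit_cmp_nat) dir_unit_over.

End DirUnit.

Lemma dir_unit_natural (X Y : DirSlice D) (h : Hom X Y) :
  fmap (DirInclusion D) (fmap dir_reflector h) ∘ dir_unit X = dir_unit Y ∘ h.
Proof.
  apply dir_slice_hom_eq; intros A a; apply sig_eq_pi; simpl; f_equal.
  - symmetry; apply ncomp_dmap.
  - apply functional_extensionality; intros z; apply sig_eq_pi; simpl; f_equal.
    + symmetry; apply ncomp_dmap.
    + rewrite (dnt_over h); reflexivity.
Qed.

Section DirTranspose.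
Context (X : DirSlice D) (Y : DirCartSlice D) (g : Hom X (proj1_sig Y)).

Lemma dir_transpose_lift A (w : fobj (dfun (proj1_sig (dir_reflector_obj X))) A) :
  exists y, ncomp (dstr (proj1_sig Y)) A y = ncomp (dstr (proj1_sig (dir_reflector_obj X))) A w /\
    dmap (dfun (proj1_sig Y)) (from_empty A) y = ncomp (dnt g) Empty_set (fst (proj1_sig w)).
Proof.
  apply dcart_lift; rewrite (dnt_over g).
  apply (dmap_dstr_of_bundle_empty (proj1_sig (PBobj piD (dir_base_bundle X)))).
Qed.

Definition dir_transpose_cmp A w := choose (dir_transpose_lift A w).

Lemma dir_transpose_cmp_nat (A B : Type) (f : B -> A) w :
  dmap (dfun (proj1_sig Y)) f (dir_transpose_cmp A w) =
  dir_transpose_cmp B (dmap (dfun (proj1_sig (dir_reflector_obj X))) f w).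
Proof.
  unfold dir_transpose_cmp.
  destruct (choose_spec (dir_transpose_lift A w)) as [E1 E2].
  destruct (choose_spec (dir_transpose_lift B (dmap _ f w))) as [F1 F2].
  apply dcart_ext.
  - rewrite <- (ncomp_dmap (dstr (proj1_sig Y)) f), E1, F1; exact (ncomp_dmap _ f w).
  - rewrite (dmap_from_empty_cmp _ f); etransitivity; [exact E2 | symmetry; exact F2].
Qed.

Definition dir_transpose : @Hom (DirCartSlice D) (dir_reflector_obj X) Y.
Proof.
  exists (dir_nat_trans dir_transpose_cmp dir_transpose_cmp_nat).
  apply NatTrans_eq; intros A; apply functional_extensionality; intros w.
  exact (proj1 (choose_spec (dir_transpose_lift A w))).
Defined.

Lemma dir_transpose_spec : fmap (DirInclusion D) dir_transpose ∘ dir_unit X = g.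
Proof.
  apply dir_slice_hom_eq; intros A a; simpl; unfold dir_transpose_cmp.
  destruct (choose_spec (dir_transpose_lift A (dir_unit_cmp X A a))) as [E1 E2].
  apply dcart_ext.
  - rewrite E1, (dnt_over g).
    exact (f_equal (fun k : NatTrans (dfun X) DFun => ncomp k A a) (dir_unit_over X)).
  - rewrite E2; simpl; symmetry; apply ncomp_dmap.
Qed.

Lemma dir_transpose_unique (h : @Hom (DirCartSlice D) (dir_reflector_obj X) Y) :
  fmap (DirInclusion D) h ∘ dir_unit X = g -> h = dir_transpose.
Proof.
  intros Hh; apply dir_slice_hom_eq; intros A w; simpl; unfold dir_transpose_cmp.
  destruct (choose_spec (dir_transpose_lift A w)) as [E1 E2].
  apply dcart_ext.
  - rewrite E1; apply (dnt_over h).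
  - rewrite E2, (ncomp_dmap (dnt h)).
    assert (Ew : dmap (dfun (proj1_sig (dir_reflector_obj X))) (from_empty A) w =
                 dir_unit_cmp X Empty_set (fst (proj1_sig w))).
    { apply sig_eq_pi; simpl; f_equal.
      - symmetry; apply dmap_from_empty_id.
      - apply functional_extensionality; intros []. }
    rewrite Ew.
    exact (f_equal (fun k : Hom X (proj1_sig Y) => ncomp (dnt k) Empty_set (fst (proj1_sig w))) Hh).
Qed.

End DirTranspose.

Lemma dir_reflector_left_adjoint : LeftAdjointUnit dir_reflector (DirInclusion D) dir_unit.
Proof.
  split; [exact dir_unit_natural|].
  intros X Y g; exists (dir_transpose X Y g); split;
    [apply dir_transpose_spec | apply dir_transpose_unique].
Qed.

(* As for bundles: on families the reflector becomes [forget_tot]. *)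
Lemma dir_reflector_lex : PreservesFiniteLimits dir_reflector.
Proof.
  apply (lex_of_ff_cmp _ dir_base_fibres_fully_faithful).
  set (PB := fun X => proj1_sig (PBobj piD (dir_base_bundle X))).
  refine (lex_natiso (FComp dir_fibres (forget_tot piD)) (FComp dir_reflector dir_base_fibres)
    (fun X => fmap (forget_tot piD) (dir_fibres_of_bundle_from (PB X)))
    (fun X => fmap (forget_tot piD) (dir_fibres_of_bundle_to (PB X))) _ _ _
    (lex_cmp _ _ (equivalence_lex _ dir_fibres_fully_faithful dir_fibres_ess_surj)
       (right_adjoint_lex _ _ _ (forget_tot_right_adjoint piD)))).
  - intros X Y f; apply FamHom_eq; [|intros []]; intros b x; apply sig_eq_pi, sig_eq_pi; simpl.
    f_equal; apply functional_extensionality; intros [].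
  - intros X; apply FamHom_eq; [|intros []].
    exact (hom_base_congr (dir_fibres_of_bundle_to_from (PB X))).
  - intros X; apply FamHom_eq; [|intros []].
    exact (hom_base_congr (dir_fibres_of_bundle_from_to (PB X))).
Qed.

Lemma DirInclusion_subtopos : SubtoposInclusion (DirInclusion D).
Proof.
  split; [exact DirSlice_topos | split; [exact DirCartSlice_topos | split]].
  - apply Incl_fully_faithful.
  - exists dir_reflector, dir_unit; split; [exact dir_reflector_left_adjoint | exact dir_reflector_lex].
Qed.

End DirichletOver.

Lemma SetArrInclusion_subtopos {E B : Type} (pi : E -> B) : SubtoposInclusion (SetArrInclusion pi).
Proof.
  split; [apply SetArrSlice_topos | split; [apply SetArrCartSlice_topos | split]].
  - apply Incl_fully_faithful.
  - exists (toFunctor (PBfunctor pi)), (PBunit pi); split; [apply PB_left_adjoint | apply PB_lex].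
Qed.

Theorem theorem3p4 :
  (forall (E B : Type) (pi : E -> B),
     SubtoposInclusion (SetArrInclusion pi) /\
     exists L : FunctorOn (PBobj pi),
       LeftAdjointUnit (toFunctor L) (SetArrInclusion pi) (PBunit pi) /\
       PreservesFiniteLimits (toFunctor L)) /\
  (forall D : DirObj, SubtoposInclusion (DirInclusion D)).
Proof.
  split.
  - intros E B pi; split; [apply SetArrInclusion_subtopos|].
    exists (PBfunctor pi); split; [apply PB_left_adjoint | apply PB_lex].
  - exact DirInclusion_subtopos.
Qed.
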